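(* Let $F=(X,Y,Z)\colon\mathbb{D}_1\to\mathbb{C}^3$ be a bounded null holomorphic immersion with complete induced metric such that $1<|X|<2$ and $|Y|<1/3$ on $\mathbb{D}_1$. Let $W(z):=-\int_0^z Y\,dX$ and $$\mathcal{L}:=\begin{pmatrix}e^{-W}&Ye^{W}\\ Xe^{-W}&(1+XY)e^{W}\end{pmatrix},$$ so that $\mathcal{L}^{-1}d\mathcal{L}=\begin{pmatrix}0&\theta\\ \omega&0\end{pmatrix}$ with $\omega=e^{-2W}dX$, $\theta=e^{2W}(dY-Y^2dX)$. Then the metric $ds^2_{\mathcal L}=|\omega|^2+|\theta|^2$ is complete on $\mathbb{D}_1$; i.e., the flat front $f=\mathcal{L}\mathcal{L}^*\colon\mathbb{D}_1\to H^3$ is weakly complete.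
   Context: $\mathbb{D}_1$ is the open unit disk; null means $F_z\cdot F_z\equiv 0$ for the complex bilinear dot product on $\mathbb{C}^3$. $H^3=\{aa^*: a\in\mathrm{SL}(2,\mathbb{C})\}$. A flat front $f=\mathcal{L}\mathcal{L}^*$ with holomorphic Legendrian lift $\mathcal{L}$ is weakly complete if $|\omega|^2+|\theta|^2$ is a complete Riemannian metric on $\mathbb{D}_1$. *)

From Stdlib Require Import Reals Lra.
Open Scope R_scope.

Definition Cpx : Type := (R * R)%type.
Definition Cre (z : Cpx) : R := fst z.
Definition Cim (z : Cpx) : R := snd z.
Definition Cof (x : R) : Cpx := (x, 0).
Definition C0 : Cpx := (0, 0).
Definition C1 : Cpx := (1, 0).
Definition Cadd (z w : Cpx) : Cpx := (fst z + fst w, snd z + snd w).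
Definition Copp (z : Cpx) : Cpx := (- fst z, - snd z).
Definition Csub (z w : Cpx) : Cpx := Cadd z (Copp w).
Definition Cmul (z w : Cpx) : Cpx :=
  (fst z * fst w - snd z * snd w, fst z * snd w + snd z * fst w).
Definition Cnorm2 (z : Cpx) : R := fst z * fst z + snd z * snd z.
Definition Cinv (z : Cpx) : Cpx := (fst z / Cnorm2 z, - snd z / Cnorm2 z).
Definition Cdiv (z w : Cpx) : Cpx := Cmul z (Cinv w).
Definition Cmod (z : Cpx) : R := sqrt (Cnorm2 z).
Definition Cexp (z : Cpx) : Cpx := (exp (fst z) * cos (snd z), exp (fst z) * sin (snd z)).

Definition in_disk (z : Cpx) : Prop := Cmod z < 1.

Definition has_cderiv (f : Cpx -> Cpx) (z l : Cpx) : Prop :=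
  forall eps : R, 0 < eps -> exists delta : R, 0 < delta /\
    forall h : Cpx, h <> C0 -> Cmod h < delta ->
      Cmod (Csub (Cdiv (Csub (f (Cadd z h)) (f z)) h) l) < eps.

Definition holo_on_disk (f f' : Cpx -> Cpx) : Prop :=
  forall z : Cpx, in_disk z -> has_cderiv f z (f' z).

(** A divergent Cpx^1 path in D_1: gamma : [0,1) -> D_1, continuously
    differentiable (derivative gamma'), with |gamma(t)| -> 1 as t -> 1^-
    (i.e. gamma eventually leaves every compact subset of D_1). *)
Definition divergent_path (gamma gamma' : R -> Cpx) : Prop :=
  (forall t, 0 <= t < 1 -> in_disk (gamma t)) /\
  (forall t, 0 <= t < 1 ->
     derivable_pt_lim (fun s => fst (gamma s)) t (fst (gamma' t)) /\
     derivable_pt_lim (fun s => snd (gamma s)) t (snd (gamma' t)) /\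
     continuity_pt (fun s => fst (gamma' s)) t /\
     continuity_pt (fun s => snd (gamma' s)) t) /\
  (forall eps, 0 < eps -> exists t0, 0 <= t0 < 1 /\
     forall t, t0 <= t < 1 -> 1 - eps < Cmod (gamma t)).

(** A conformal metric ds = rho |dz| on D_1 (rho >= 0 continuous in practice)
    is complete iff every divergent path has infinite length, i.e. the
    length  int_0^s rho(gamma t) |gamma'(t)| dt  is unbounded as s -> 1^-. *)
Definition complete_conformal_metric (rho : Cpx -> R) : Prop :=
  forall gamma gamma' : R -> Cpx, divergent_path gamma gamma' ->
    forall M : R, exists s : R, 0 <= s < 1 /\
      exists pr : Riemann_integrable
                    (fun t => rho (gamma t) * Cmod (gamma' t)) 0 s,
        M < RiemannInt pr.

(** The induced metric of a holomorphic immersion F = (X,Y,Z) : D_1 -> Cpx^3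
    is |F_z|^2 |dz|^2 (up to an irrelevant constant factor), with
    |F_z|^2 = |X'|^2 + |Y'|^2 + |Z'|^2. *)
Definition induced_density (X' Y' Z' : Cpx -> Cpx) (z : Cpx) : R :=
  sqrt (Cnorm2 (X' z) + Cnorm2 (Y' z) + Cnorm2 (Z' z)).

Definition two : Cpx := (2, 0).
Definition omega_coef (W X' : Cpx -> Cpx) (z : Cpx) : Cpx :=
  Cmul (Cexp (Copp (Cmul two (W z)))) (X' z).
Definition theta_coef (W X' Y Y' : Cpx -> Cpx) (z : Cpx) : Cpx :=
  Cmul (Cexp (Cmul two (W z)))
       (Csub (Y' z) (Cmul (Cmul (Y z) (Y z)) (X' z))).

(** ds^2_L = |omega|^2 + |theta|^2, as a conformal density rho with ds = rho |dz|. *)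
Definition dsL_density (W X' Y Y' : Cpx -> Cpx) (z : Cpx) : R :=
  sqrt (Cnorm2 (omega_coef W X' z) + Cnorm2 (theta_coef W X' Y Y' z)).

(* Let gamma be a divergent path and suppose its ds_L-length is
   bounded by M.  Along gamma:
   - d/dt e^{-2 Re W} has modulus 2 |Y X' gamma'| e^{-2 Re W} <= (2/3) |omega| |gamma'|,
     so e^{-2 Re W} stays bounded;
   - d/dt [(1 + X Y) e^W] = X e^{-W} theta gamma', so (1 + X Y) e^W stays
     bounded, and since |1 + X Y| >= 1/3, so does e^{Re W};
   - hence |X'| = e^{2 Re W} |omega| and |Y'| <= e^{-2 Re W} |theta| + |X'| are
     bounded by multiples of the ds_L-density, and by the null condition so is
     the induced density: the induced length of gamma is bounded, contradicting
     the completeness of the induced metric.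
   The integrability of the ds_L-density along gamma requires the continuity
   of X' and Y', which is not assumed (holomorphic means complex
   differentiable).  We prove it from Goursat's theorem for rectangles, via
   the Cauchy-type formula f'(z) int dw/(w-z) = int f(w)/(w-z)^2 - f(z) int dw/(w-z)^2
   over a small square, whose right-hand side and int dw/(w-z) depend
   continuously on z. *)

From Pilot Require Import Defs.
From Stdlib Require Import Reals Lra Psatz Classical FunctionalExtensionality.
From Coquelicot Require Import Coquelicot.
Open Scope R_scope.

(* The complex numbers of [Defs] are pairs of reals, i.e. Coquelicot's [C];
   these identities let us work with Coquelicot's field structure on [C]. *)
Lemma Cmod_eq (z : C) : Defs.Cmod z = Cmod z.
Proof. unfold Defs.Cmod, Cmod, Cnorm2. f_equal. simpl. ring. Qed.

Lemma Cdiv_eq (a b : C) : Defs.Cdiv a b = (a / b)%C.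
Proof.
  unfold Defs.Cdiv, Defs.Cinv, Cnorm2, Cdiv, Cinv. simpl.
  replace (fst b * (fst b * 1) + snd b * (snd b * 1)) with (fst b * fst b + snd b * snd b) by ring.
  reflexivity.
Qed.

Lemma Rabs_fst_le (z : C) : Rabs (fst z) <= Cmod z.
Proof. eapply Rle_trans; [apply Rmax_l|apply Rmax_Cmod]. Qed.

Lemma Rabs_snd_le (z : C) : Rabs (snd z) <= Cmod z.
Proof. eapply Rle_trans; [apply Rmax_r|apply Rmax_Cmod]. Qed.

Lemma Cmod_le_abs_sum (z : C) : Cmod z <= Rabs (fst z) + Rabs (snd z).
Proof.
  destruct z as [p q].
  assert (E : ((p, q) : C) = (RtoC p + Ci * RtoC q)%C)
    by (unfold RtoC, Ci; apply injective_projections; simpl; ring).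
  rewrite E at 1. eapply Rle_trans. apply Cmod_triangle.
  rewrite Cmod_mult, Cmod_Ci, !Cmod_R. cbn [fst snd]. lra.
Qed.

Lemma Cmod_sub_sym (a b : C) : Cmod (a - b)%C = Cmod (b - a)%C.
Proof. replace (a - b)%C with (- (b - a))%C by ring. apply Cmod_opp. Qed.

Lemma Cmod_sub_self (z : C) : Cmod (z - z)%C = 0.
Proof. replace (z - z)%C with (RtoC 0) by ring. rewrite Cmod_R. apply Rabs_R0. Qed.

Lemma Cmod_triangle3 (a b c : C) : Cmod (a + b + c)%C <= Cmod a + Cmod b + Cmod c.
Proof. eapply Rle_trans. apply Cmod_triangle. pose proof (Cmod_triangle a b). lra. Qed.

Lemma Cmod_lower (u v : C) : Cmod (u - v)%C <= Cmod v / 2 -> Cmod v / 2 <= Cmod u.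
Proof.
  intros H. pose proof (Cmod_triangle u (v - u)%C) as Htri.
  replace (u + (v - u))%C with v in Htri by ring. rewrite Cmod_sub_sym in Htri. lra.
Qed.

Lemma lt_Rmin (x a b : R) : x < Rmin a b -> x < a /\ x < b.
Proof. intros H. split; eapply Rlt_le_trans; [exact H|apply Rmin_l|exact H|apply Rmin_r]. Qed.

(* Complex
   differentiability is the case of all increments; the derivative of a path
   [phi : R -> C] at [t] is the case of real increments, applied to the
   function [lift phi] of [z] that only looks at the real part of [z]. *)
Definition deriv_along (S : C -> Prop) (f : C -> C) (z l : C) : Prop :=
  forall eps, 0 < eps -> exists delta, 0 < delta /\
    forall h : C, S h -> Cmod h < delta -> Cmod (f (z + h) - f z - l * h)%C <= eps * Cmod h.

Definition cderiv : (C -> C) -> C -> C -> Prop := deriv_along (fun _ => True).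

Definition real_incr (h : C) : Prop := snd h = 0.

Definition lift (phi : R -> C) : C -> C := fun z => phi (fst z).

Definition pderiv (phi : R -> C) (t : R) (l : C) : Prop :=
  deriv_along real_incr (lift phi) (RtoC t) l.

Definition ccont (f : C -> C) (z : C) : Prop :=
  forall eps, 0 < eps -> exists delta, 0 < delta /\
    forall w : C, Cmod (w - z)%C < delta -> Cmod (f w - f z)%C < eps.

Definition pcont (phi : R -> C) (t : R) : Prop := ccont (lift phi) (RtoC t).

Lemma has_cderiv_cderiv (f : C -> C) (z l : C) : has_cderiv f z l -> cderiv f z l.
Proof.
  intros H eps Heps. destruct (H eps Heps) as [d [Hd Hh]].
  exists d; split; auto. intros h _ Hhd.
  destruct (Ceq_dec h 0) as [->|Hn].
  - replace (f (z + 0) - f z - l * 0)%C with (RtoC 0).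
    + rewrite Cmod_R, Rabs_R0. lra.
    + replace (z + 0)%C with z by ring. ring.
  - assert (Hq := Hh h Hn). rewrite !Cmod_eq in Hq. specialize (Hq Hhd).
    assert (Hq' : Cmod ((f (z + h) - f z) / h - l)%C < eps) by (rewrite <- Cdiv_eq; exact Hq).
    replace (f (z + h) - f z - l * h)%C with (((f (z + h) - f z) / h - l) * h)%C
      by (field; auto).
    rewrite Cmod_mult. apply Rmult_le_compat_r. apply Cmod_ge_0. lra.
Qed.

Lemma deriv_along_val S f z (l1 l2 : C) : l1 = l2 -> deriv_along S f z l1 -> deriv_along S f z l2.
Proof. now intros ->. Qed.

Lemma deriv_along_small S f z l : deriv_along S f z l ->
  forall eps, 0 < eps -> exists delta, 0 < delta /\
    forall h, S h -> Cmod h < delta -> Cmod (f (z + h) - f z)%C < eps.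
Proof.
  intros H eps Heps. destruct (H 1 Rlt_0_1) as [d [Hd Hh]].
  set (M := Cmod l + 1).
  assert (HM : 0 < M) by (unfold M; pose proof (Cmod_ge_0 l); lra).
  exists (Rmin d (eps / M)). split.
  { apply Rmin_pos; auto. apply Rdiv_lt_0_compat; auto. }
  intros h Sh Hhd. specialize (Hh h Sh (Rlt_le_trans _ _ _ Hhd (Rmin_l _ _))).
  replace (f (z + h) - f z)%C with ((f (z + h) - f z - l * h) + l * h)%C by ring.
  eapply Rle_lt_trans. apply Cmod_triangle. rewrite Cmod_mult.
  assert (Hsmall : Cmod h * M < eps).
  { assert (Hh2 : Cmod h < eps / M) by (eapply Rlt_le_trans; [apply Hhd|apply Rmin_r]).
    apply (Rmult_lt_compat_r M) in Hh2; auto. unfold Rdiv in Hh2.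
    rewrite Rmult_assoc, Rinv_l in Hh2; lra. }
  unfold M in Hsmall. pose proof (Cmod_ge_0 h). nra.
Qed.

Lemma cderiv_cont (f : C -> C) (z l : C) : cderiv f z l -> ccont f z.
Proof.
  intros H eps Heps. destruct (deriv_along_small _ _ _ _ H eps Heps) as [d [Hd Hh]].
  exists d. split; auto. intros w Hw.
  replace w with (z + (w - z))%C by ring. apply Hh; auto.
Qed.

Lemma pderiv_cont (phi : R -> C) (t : R) (l : C) : pderiv phi t l -> pcont phi t.
Proof.
  intros H eps Heps. destruct (deriv_along_small _ _ _ _ H eps Heps) as [d [Hd Hh]].
  exists d. split; auto. intros w Hw.
  set (h := (fst w - t, 0) : C).
  assert (Hlift : lift phi w = lift phi (RtoC t + h)%C) by (unfold lift, h; f_equal; cbn [fst Cplus RtoC]; ring).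
  rewrite Hlift. apply Hh; [reflexivity|].
  eapply Rle_lt_trans; [|exact Hw]. unfold h.
  replace (fst w - t, 0) with (RtoC (fst (w - RtoC t)%C)) by (unfold RtoC; simpl; f_equal; ring).
  rewrite Cmod_R. apply Rabs_fst_le.
Qed.

Lemma deriv_along_const S (c z : C) : deriv_along S (fun _ => c) z 0%C.
Proof.
  intros eps Heps. exists 1. split; [lra|]. intros h _ _.
  replace (c - c - 0 * h)%C with (RtoC 0) by ring. rewrite Cmod_R, Rabs_R0.
  pose proof (Cmod_ge_0 h). nra.
Qed.

Lemma deriv_along_id S (z : C) : deriv_along S (fun w => w) z 1%C.
Proof.
  intros eps Heps. exists 1. split; [lra|]. intros h _ _.
  replace (z + h - z - 1 * h)%C with (RtoC 0) by ring. rewrite Cmod_R, Rabs_R0.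
  pose proof (Cmod_ge_0 h). nra.
Qed.

Lemma deriv_along_plus S (f g : C -> C) (z lf lg : C) :
  deriv_along S f z lf -> deriv_along S g z lg ->
  deriv_along S (fun w => f w + g w)%C z (lf + lg)%C.
Proof.
  intros Hf Hg eps Heps.
  destruct (Hf (eps/2)) as [d1 [Hd1 H1]]; [lra|].
  destruct (Hg (eps/2)) as [d2 [Hd2 H2]]; [lra|].
  exists (Rmin d1 d2). split; [apply Rmin_pos; auto|]. intros h Sh Hh.
  specialize (H1 h Sh (Rlt_le_trans _ _ _ Hh (Rmin_l _ _))).
  specialize (H2 h Sh (Rlt_le_trans _ _ _ Hh (Rmin_r _ _))).
  replace (f (z + h) + g (z + h) - (f z + g z) - (lf + lg) * h)%C with
    ((f (z + h) - f z - lf * h) + (g (z + h) - g z - lg * h))%C by ring.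
  eapply Rle_trans. apply Cmod_triangle. lra.
Qed.

Lemma mul_le_of_le_div (c x eps : R) : 0 <= c -> 0 < eps -> 0 <= x ->
  x <= eps / (c + 1) -> c * x <= eps.
Proof.
  intros Hc He Hx H. apply Rle_trans with ((c + 1) * (eps / (c + 1))).
  - apply Rmult_le_compat; lra.
  - right. field. lra.
Qed.

Lemma deriv_along_scal S (f : C -> C) (c z lf : C) :
  deriv_along S f z lf -> deriv_along S (fun w => c * f w)%C z (c * lf)%C.
Proof.
  intros Hf eps Heps.
  destruct (Hf (eps / (Cmod c + 1))) as [d1 [Hd1 H1]].
  { apply Rdiv_lt_0_compat; auto. pose proof (Cmod_ge_0 c); lra. }
  exists d1. split; auto. intros h Sh Hh. specialize (H1 h Sh Hh).
  replace (c * f (z + h) - c * f z - c * lf * h)%C with (c * (f (z + h) - f z - lf * h))%C by ring.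
  rewrite Cmod_mult. pose proof (Cmod_ge_0 c). pose proof (Cmod_ge_0 h).
  assert (Hq : Cmod c * (eps / (Cmod c + 1)) <= eps).
  { apply mul_le_of_le_div; auto; [|lra]. apply Rlt_le, Rdiv_lt_0_compat; lra. }
  apply Rle_trans with (Cmod c * (eps / (Cmod c + 1) * Cmod h)).
  { apply Rmult_le_compat_l; auto. }
  nra.
Qed.

(* Product rule.  The remainder of [f g] splits as
   A g(z+h) + f(z) B + lf h (g(z+h) - g(z)), with A, B the remainders of f, g. *)
Lemma deriv_along_mult S (f g : C -> C) (z lf lg : C) :
  deriv_along S f z lf -> deriv_along S g z lg ->
  deriv_along S (fun w => f w * g w)%C z (lf * g z + f z * lg)%C.
Proof.
  intros Hf Hg eps Heps.
  set (Gz := Cmod (g z)). set (Fz := Cmod (f z)). set (Lf := Cmod lf).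
  assert (HGz : 0 <= Gz) by apply Cmod_ge_0.
  assert (HFz : 0 <= Fz) by apply Cmod_ge_0.
  assert (HLf : 0 <= Lf) by apply Cmod_ge_0.
  assert (He3 : 0 < eps / 3) by lra.
  destruct (Hf (eps / 3 / (Gz + 1))) as [d1 [Hd1 H1]]; [apply Rdiv_lt_0_compat; lra|].
  destruct (Hg (eps / 3 / (Fz + 1))) as [d2 [Hd2 H2]]; [apply Rdiv_lt_0_compat; lra|].
  destruct (deriv_along_small _ _ _ _ Hg (Rmin 1 (eps / 3 / (Lf + 1)))) as [d3 [Hd3 H3]].
  { apply Rmin_pos; [lra|]. apply Rdiv_lt_0_compat; lra. }
  exists (Rmin d1 (Rmin d2 d3)). split; [repeat apply Rmin_pos; auto|].
  intros h Sh Hh. destruct (lt_Rmin _ _ _ Hh) as [Hh1 [Hh2 Hh3]%lt_Rmin].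
  specialize (H1 h Sh Hh1). specialize (H2 h Sh Hh2). destruct (lt_Rmin _ _ _ (H3 h Sh Hh3)) as [HD1 HD2].
  set (A := (f (z + h) - f z - lf * h)%C) in *.
  set (B := (g (z + h) - g z - lg * h)%C) in *.
  set (D := (g (z + h) - g z)%C) in *.
  replace (f (z + h) * g (z + h) - f z * g z - (lf * g z + f z * lg) * h)%C with
    (A * g (z + h) + f z * B + lf * h * D)%C by (unfold A, B, D; ring).
  eapply Rle_trans. apply Cmod_triangle3. rewrite !Cmod_mult. fold Fz Lf.
  assert (Hgzh : Cmod (g (z + h)%C) <= Gz + 1).
  { replace (g (z + h)%C) with (g z + D)%C by (unfold D; ring).
    eapply Rle_trans. apply Cmod_triangle. fold Gz. lra. }
  pose proof (Cmod_ge_0 h). pose proof (Cmod_ge_0 A). pose proof (Cmod_ge_0 B).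
  pose proof (Cmod_ge_0 D). pose proof (Cmod_ge_0 (g (z + h)%C)).
  assert (T1 : Cmod A * Cmod (g (z + h)%C) <= eps / 3 * Cmod h).
  { rewrite Rmult_comm. replace (eps / 3 * Cmod h) with (Gz * (eps / 3 / (Gz + 1) * Cmod h) + (eps / 3 / (Gz + 1) * Cmod h)) by (field; lra).
    apply Rle_trans with ((Gz + 1) * Cmod A); [apply Rmult_le_compat_r; lra|]. nra. }
  assert (T2 : Fz * Cmod B <= eps / 3 * Cmod h).
  { assert (Fz * (eps / 3 / (Fz + 1)) <= eps / 3)
      by (apply mul_le_of_le_div; auto; [apply Rlt_le, Rdiv_lt_0_compat|]; lra).
    apply Rle_trans with (Fz * (eps / 3 / (Fz + 1) * Cmod h)); [apply Rmult_le_compat_l; auto|nra]. }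
  assert (T3 : Lf * Cmod h * Cmod D <= eps / 3 * Cmod h).
  { assert (Lf * Cmod D <= eps / 3) by (apply mul_le_of_le_div; lra). nra. }
  lra.
Qed.

(* Derivative of a reciprocal; the remainder of 1/f splits as
   -A / (f(z+h) f(z)) + lf h (f(z+h) - f(z)) / (f(z+h) f(z)^2). *)
Lemma deriv_along_inv S (f : C -> C) (z lf : C) : deriv_along S f z lf -> f z <> 0%C ->
  deriv_along S (fun w => / f w)%C z (- lf / (f z * f z))%C.
Proof.
  intros Hf Hz eps Heps.
  set (Fz := Cmod (f z)). set (Lf := Cmod lf).
  assert (HFz : 0 < Fz) by (apply Cmod_gt_0; auto).
  assert (HLf : 0 <= Lf) by apply Cmod_ge_0.
  assert (HF3 : 0 < Fz * Fz * Fz / 2) by (apply Rdiv_lt_0_compat; [repeat apply Rmult_lt_0_compat|]; lra).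
  destruct (Hf (eps * Fz * Fz / 4)) as [d1 [Hd1 H1]].
  { apply Rdiv_lt_0_compat; [|lra]. repeat apply Rmult_lt_0_compat; auto. }
  destruct (deriv_along_small _ _ _ _ Hf (Rmin (Fz / 2) (eps * Fz * Fz * Fz / (4 * (Lf + 1)))))
    as [d3 [Hd3 H3]].
  { apply Rmin_pos; [lra|]. apply Rdiv_lt_0_compat; [|lra]. repeat apply Rmult_lt_0_compat; auto. }
  exists (Rmin d1 d3). split; [apply Rmin_pos; auto|].
  intros h Sh Hh. destruct (lt_Rmin _ _ _ Hh) as [Hh1 Hh3].
  specialize (H1 h Sh Hh1). destruct (lt_Rmin _ _ _ (H3 h Sh Hh3)) as [HD1 HD2].
  set (u := f (z + h)%C) in *. set (v := f z) in *.
  set (A := (u - v - lf * h)%C) in *.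
  assert (Hu : Fz / 2 <= Cmod u) by (apply Cmod_lower; fold v Fz; lra).
  assert (Hu0 : u <> 0%C) by (apply Cmod_gt_0; lra).
  replace (/ u - / v - - lf / (v * v) * h)%C with
    ((- A) / (u * v) + lf * h * (u - v) / (u * v * v))%C by (unfold A; field; auto).
  eapply Rle_trans. apply Cmod_triangle.
  rewrite !Cmod_div by (repeat apply Cmult_neq_0; auto).
  rewrite !Cmod_mult, Cmod_opp. fold v Fz Lf.
  pose proof (Cmod_ge_0 h). pose proof (Cmod_ge_0 A). pose proof (Cmod_ge_0 (u - v)%C).
  assert (T1 : Cmod A / (Cmod u * Fz) <= eps / 2 * Cmod h).
  { apply Rle_trans with (Cmod A / (Fz * Fz / 2)).
    - apply Rmult_le_compat_l; auto. apply Rinv_le_contravar; nra.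
    - apply Rle_trans with (eps * Fz * Fz / 4 * Cmod h / (Fz * Fz / 2)).
      + apply Rmult_le_compat_r; auto. apply Rlt_le, Rinv_0_lt_compat. nra.
      + right. field. lra. }
  assert (T2 : Lf * Cmod h * Cmod (u - v)%C / (Cmod u * Fz * Fz) <= eps / 2 * Cmod h).
  { assert (Hc : Fz * Fz * Fz / 2 <= Cmod u * Fz * Fz) by nra.
    apply Rle_trans with (Lf * Cmod h * Cmod (u - v)%C / (Fz * Fz * Fz / 2)).
    - apply Rmult_le_compat_l; [apply Rmult_le_pos; [apply Rmult_le_pos|]; auto|].
      apply Rinv_le_contravar; assumption.
    - apply Rle_trans with ((Lf + 1) * Cmod h * (eps * Fz * Fz * Fz / (4 * (Lf + 1))) / (Fz * Fz * Fz / 2)).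
      + apply Rmult_le_compat_r; [apply Rlt_le, Rinv_0_lt_compat; exact HF3|].
        apply Rmult_le_compat; [nra|lra|nra|lra].
      + right. field. lra. }
  lra.
Qed.

Lemma deriv_along_comp S (F g : C -> C) (z L l : C) :
  cderiv F (g z) L -> deriv_along S g z l -> deriv_along S (fun w => F (g w)) z (L * l)%C.
Proof.
  intros HF Hg eps Heps.
  set (Ml := Cmod l + 1). set (ML := Cmod L + 1).
  assert (HMl : 0 < Ml) by (unfold Ml; pose proof (Cmod_ge_0 l); lra).
  assert (HML : 0 < ML) by (unfold ML; pose proof (Cmod_ge_0 L); lra).
  destruct (HF (eps / (2 * Ml))) as [d1 [Hd1 G1]]; [apply Rdiv_lt_0_compat; lra|].
  destruct (Hg (Rmin 1 (eps / (2 * ML)))) as [d2 [Hd2 G2]].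
  { apply Rmin_pos; [lra|apply Rdiv_lt_0_compat; lra]. }
  exists (Rmin d2 (d1 / Ml)). split; [apply Rmin_pos; auto; apply Rdiv_lt_0_compat; auto|].
  intros h Sh Hh. destruct (lt_Rmin _ _ _ Hh) as [Hh2 Hh1]. specialize (G2 h Sh Hh2).
  set (k := (g (z + h) - g z)%C).
  pose proof (Cmod_ge_0 h). pose proof (Cmod_ge_0 L).
  assert (Hk : Cmod k <= Ml * Cmod h).
  { unfold k. replace (g (z + h) - g z)%C with ((g (z + h) - g z - l * h) + l * h)%C by ring.
    eapply Rle_trans. apply Cmod_triangle. rewrite Cmod_mult.
    assert (Rmin 1 (eps / (2 * ML)) <= 1) by apply Rmin_l. unfold Ml. nra. }
  assert (Hkd : Cmod k < d1).
  { eapply Rle_lt_trans. apply Hk. apply (Rmult_lt_compat_l Ml) in Hh1; auto.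
    replace (Ml * (d1 / Ml)) with d1 in Hh1 by (field; lra). lra. }
  specialize (G1 k I Hkd).
  replace (g z + k)%C with (g (z + h)%C) in G1 by (unfold k; ring).
  replace (F (g (z + h)%C) - F (g z) - L * l * h)%C with
    ((F (g (z + h)) - F (g z) - L * k) + L * (g (z + h) - g z - l * h))%C by (unfold k; ring).
  eapply Rle_trans. apply Cmod_triangle. rewrite Cmod_mult.
  assert (T1 : Cmod (F (g (z + h)%C) - F (g z) - L * k)%C <= eps / 2 * Cmod h).
  { eapply Rle_trans. apply G1. apply Rle_trans with (eps / (2 * Ml) * (Ml * Cmod h)).
    - apply Rmult_le_compat_l; auto. apply Rlt_le, Rdiv_lt_0_compat; lra.
    - right. field. lra. }
  assert (T2 : Cmod L * Cmod (g (z + h) - g z - l * h)%C <= eps / 2 * Cmod h).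
  { apply Rle_trans with (Cmod L * (eps / (2 * ML) * Cmod h)).
    - apply Rmult_le_compat_l; auto. eapply Rle_trans. apply G2.
      apply Rmult_le_compat_r; auto. apply Rmin_r.
    - assert (Cmod L * (eps / (2 * ML)) <= eps / 2).
      { apply mul_le_of_le_div; [lra|lra|apply Rlt_le, Rdiv_lt_0_compat; lra|].
        right. unfold ML. field. lra. }
      nra. }
  lra.
Qed.

Lemma pderiv_of_components (phi : R -> C) t (l : C) :
  derivable_pt_lim (fun s => fst (phi s)) t (fst l) ->
  derivable_pt_lim (fun s => snd (phi s)) t (snd l) -> pderiv phi t l.
Proof.
  assert (Hrem : forall (f : R -> R) m eps, derivable_pt_lim f t m -> 0 < eps ->
    exists delta, 0 < delta /\ forall r, Rabs r < delta -> Rabs (f (t + r) - f t - m * r) <= eps * Rabs r).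
  { intros f m eps H Heps. destruct (H eps Heps) as [d Hd]. exists d. split; [apply cond_pos|].
    intros r Hr. destruct (Req_dec r 0) as [->|Hn].
    - rewrite Rplus_0_r. replace (f t - f t - m * 0) with 0 by ring. rewrite Rabs_R0. lra.
    - replace (f (t + r) - f t - m * r) with (((f (t + r) - f t) / r - m) * r) by (field; auto).
      rewrite Rabs_mult. apply Rmult_le_compat_r; [apply Rabs_pos|]. specialize (Hd r Hn Hr). lra. }
  intros H1 H2 eps Heps.
  destruct (Hrem _ _ (eps / 2) H1 ltac:(lra)) as [d1 [Hd1 G1]].
  destruct (Hrem _ _ (eps / 2) H2 ltac:(lra)) as [d2 [Hd2 G2]].
  exists (Rmin d1 d2). split; [apply Rmin_pos; auto|]. intros [r q] Hq Hh.
  unfold real_incr in Hq. simpl in Hq. subst q.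
  replace ((r, 0) : C) with (RtoC r) in * by reflexivity. rewrite Cmod_R in *.
  specialize (G1 r (Rlt_le_trans _ _ _ Hh (Rmin_l _ _))).
  specialize (G2 r (Rlt_le_trans _ _ _ Hh (Rmin_r _ _))).
  eapply Rle_trans. apply Cmod_le_abs_sum. unfold lift. cbn [fst snd Cplus Cminus Copp Cmult RtoC].
  replace (fst (phi (t + r)) + - fst (phi t) + - (fst l * r - snd l * 0)) with
    (fst (phi (t + r)) - fst (phi t) - fst l * r) by ring.
  replace (snd (phi (t + r)) + - snd (phi t) + - (fst l * 0 + snd l * r)) with
    (snd (phi (t + r)) - snd (phi t) - snd l * r) by ring.
  lra.
Qed.

Lemma components_of_pderiv (phi : R -> C) t (l : C) (pr : C -> R) :
  (forall z, Rabs (pr z) <= Cmod z) -> (forall u v, pr (u - v)%C = pr u - pr v) ->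
  (forall r : R, pr (l * RtoC r)%C = pr l * r) ->
  pderiv phi t l -> derivable_pt_lim (fun s => pr (phi s)) t (pr l).
Proof.
  intros Hc Hl Hm H eps Heps.
  destruct (H (eps / 2) ltac:(lra)) as [d [Hd G]].
  exists (mkposreal d Hd). intros r Hn Hr. simpl in Hr.
  assert (Gr : Cmod (phi (t + r)%R - phi t - l * RtoC r)%C <= eps / 2 * Rabs r).
  { rewrite <- Cmod_R. apply (G (RtoC r)); [reflexivity|rewrite Cmod_R; exact Hr]. }
  assert (Hr0 : 0 < Rabs r) by (apply Rabs_pos_lt; auto).
  replace ((pr (phi (t + r)) - pr (phi t)) / r - pr l) with
    (pr (phi (t + r)%R - phi t - l * RtoC r)%C / r) by (rewrite !Hl, Hm; field; auto).
  unfold Rdiv. rewrite Rabs_mult, Rabs_inv.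
  apply Rle_lt_trans with (eps / 2 * Rabs r * / Rabs r).
  - apply Rmult_le_compat_r; [apply Rlt_le, Rinv_0_lt_compat; auto|].
    eapply Rle_trans; [apply Hc|exact Gr].
  - replace (eps / 2 * Rabs r * / Rabs r) with (eps / 2) by (field; lra). lra.
Qed.

Lemma pderiv_fst (phi : R -> C) t l : pderiv phi t l -> derivable_pt_lim (fun s => fst (phi s)) t (fst l).
Proof.
  apply (components_of_pderiv phi t l (fun z : C => fst z)); [apply Rabs_fst_le|reflexivity|].
  intros r. simpl. ring.
Qed.

Lemma pderiv_snd (phi : R -> C) t l : pderiv phi t l -> derivable_pt_lim (fun s => snd (phi s)) t (snd l).
Proof.
  apply (components_of_pderiv phi t l (fun z : C => snd z)); [apply Rabs_snd_le|reflexivity|].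
  intros r. simpl. ring.
Qed.

Lemma pderiv_comp (F : C -> C) (phi : R -> C) t (L l : C) :
  cderiv F (phi t) L -> pderiv phi t l -> pderiv (fun s => F (phi s)) t (L * l)%C.
Proof. exact (deriv_along_comp real_incr F (lift phi) (RtoC t) L l). Qed.

Lemma pderiv_mult (f g : R -> C) t (lf lg : C) : pderiv f t lf -> pderiv g t lg ->
  pderiv (fun s => f s * g s)%C t (lf * g t + f t * lg)%C.
Proof. exact (deriv_along_mult real_incr (lift f) (lift g) (RtoC t) lf lg). Qed.

Lemma pderiv_cexp (psi : R -> C) t (l : C) : pderiv psi t l ->
  pderiv (fun s => Cexp (psi s)) t (Cexp (psi t) * l)%C.
Proof.
  intros H.
  assert (H1 := pderiv_fst _ _ _ H). assert (H2 := pderiv_snd _ _ _ H).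
  apply is_derive_Reals in H1. apply is_derive_Reals in H2.
  set (p1 := fun s => fst (psi s)) in *. set (p2 := fun s => snd (psi s)) in *.
  assert (E1 : is_derive (fun s => exp (p1 s)) t (fst l * exp (p1 t)))
    by (apply (is_derive_comp exp p1 t); [apply is_derive_exp|exact H1]).
  assert (E2 : is_derive (fun s => cos (p2 s)) t (snd l * - sin (p2 t)))
    by (apply (is_derive_comp cos p2 t); [apply is_derive_cos|exact H2]).
  assert (E3 : is_derive (fun s => sin (p2 s)) t (snd l * cos (p2 t)))
    by (apply (is_derive_comp sin p2 t); [apply is_derive_sin|exact H2]).
  assert (M1 := is_derive_mult _ _ t _ _ E1 E2 ltac:(intros; apply Rmult_comm)).
  assert (M2 := is_derive_mult _ _ t _ _ E1 E3 ltac:(intros; apply Rmult_comm)).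
  apply pderiv_of_components; apply is_derive_Reals; unfold Cexp; simpl.
  - replace (exp (fst (psi t)) * cos (snd (psi t)) * fst l - exp (fst (psi t)) * sin (snd (psi t)) * snd l)
      with (plus (mult (fst l * exp (p1 t)) (cos (p2 t))) (mult (exp (p1 t)) (snd l * - sin (p2 t))))
      by (unfold p1, p2, plus, mult; simpl; ring).
    exact M1.
  - replace (exp (fst (psi t)) * cos (snd (psi t)) * snd l + exp (fst (psi t)) * sin (snd (psi t)) * fst l)
      with (plus (mult (fst l * exp (p1 t)) (sin (p2 t))) (mult (exp (p1 t)) (snd l * cos (p2 t))))
      by (unfold p1, p2, plus, mult; simpl; ring).
    exact M2.
Qed.

Lemma ccont_ext (f g : C -> C) z : (forall w, f w = g w) -> ccont f z -> ccont g z.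
Proof. intros E. replace g with f; auto. now apply functional_extensionality. Qed.

Lemma ccont_const (c z : C) : ccont (fun _ => c) z.
Proof. intros eps Heps. exists 1. split; [lra|]. intros. rewrite Cmod_sub_self. lra. Qed.

Lemma ccont_id (z : C) : ccont (fun w => w) z.
Proof. intros eps Heps. exists eps. split; auto. Qed.

Lemma ccont_comp (F g : C -> C) z : ccont g z -> ccont F (g z) -> ccont (fun w => F (g w)) z.
Proof.
  intros Hg HF eps Heps. destruct (HF eps Heps) as [d1 [Hd1 H1]].
  destruct (Hg d1 Hd1) as [d2 [Hd2 H2]]. exists d2. split; auto.
Qed.

Lemma ccont_plus (f g : C -> C) z : ccont f z -> ccont g z -> ccont (fun w => f w + g w)%C z.
Proof.
  intros Hf Hg eps Heps.
  destruct (Hf (eps/2)) as [d1 [Hd1 H1]]; [lra|].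
  destruct (Hg (eps/2)) as [d2 [Hd2 H2]]; [lra|].
  exists (Rmin d1 d2). split; [apply Rmin_pos; auto|]. intros w Hw.
  specialize (H1 w (Rlt_le_trans _ _ _ Hw (Rmin_l _ _))).
  specialize (H2 w (Rlt_le_trans _ _ _ Hw (Rmin_r _ _))).
  replace (f w + g w - (f z + g z))%C with ((f w - f z) + (g w - g z))%C by ring.
  eapply Rle_lt_trans. apply Cmod_triangle. lra.
Qed.

Lemma ccont_mult (f g : C -> C) z : ccont f z -> ccont g z -> ccont (fun w => f w * g w)%C z.
Proof.
  intros Hf Hg eps Heps.
  set (F := Cmod (f z)). set (G := Cmod (g z)).
  assert (HF : 0 <= F) by apply Cmod_ge_0. assert (HG : 0 <= G) by apply Cmod_ge_0.
  assert (He2 : 0 < eps / 2) by lra.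
  destruct (Hf (eps / 2 / (G + 1))) as [d1 [Hd1 H1]]; [apply Rdiv_lt_0_compat; lra|].
  destruct (Hg (Rmin 1 (eps / 2 / (F + 1)))) as [d2 [Hd2 H2]].
  { apply Rmin_pos; [lra|apply Rdiv_lt_0_compat; lra]. }
  exists (Rmin d1 d2). split; [apply Rmin_pos; auto|]. intros w Hw.
  specialize (H1 w (Rlt_le_trans _ _ _ Hw (Rmin_l _ _))).
  specialize (H2 w (Rlt_le_trans _ _ _ Hw (Rmin_r _ _))).
  replace (f w * g w - f z * g z)%C with ((f w - f z) * g w + f z * (g w - g z))%C by ring.
  eapply Rle_lt_trans. apply Cmod_triangle. rewrite !Cmod_mult. fold F.
  pose proof (Cmod_ge_0 (f w - f z)%C). pose proof (Cmod_ge_0 (g w - g z)%C).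
  assert (Hgw : Cmod (g w) <= G + 1).
  { replace (g w) with (g z + (g w - g z))%C by ring. eapply Rle_trans. apply Cmod_triangle.
    fold G. assert (Rmin 1 (eps / 2 / (F + 1)) <= 1) by apply Rmin_l. lra. }
  assert (T1 : Cmod (f w - f z)%C * Cmod (g w) < eps / 2).
  { apply Rle_lt_trans with (Cmod (f w - f z)%C * (G + 1)); [apply Rmult_le_compat_l; lra|].
    apply (Rmult_lt_compat_r (G + 1)) in H1; [|lra].
    replace (eps / 2 / (G + 1) * (G + 1)) with (eps / 2) in H1 by (field; lra). exact H1. }
  assert (T2 : F * Cmod (g w - g z)%C < eps / 2).
  { apply Rle_lt_trans with ((F + 1) * Cmod (g w - g z)%C); [apply Rmult_le_compat_r; lra|].
    assert (Cmod (g w - g z)%C < eps / 2 / (F + 1)) by (eapply Rlt_le_trans; [exact H2|apply Rmin_r]).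
    apply (Rmult_lt_compat_l (F + 1)) in H3; [|lra].
    replace ((F + 1) * (eps / 2 / (F + 1))) with (eps / 2) in H3 by (field; lra). exact H3. }
  lra.
Qed.

Lemma ccont_inv (f : C -> C) z : ccont f z -> f z <> 0%C -> ccont (fun w => / f w)%C z.
Proof.
  intros Hf Hz eps Heps.
  set (F := Cmod (f z)). assert (HF : 0 < F) by (apply Cmod_gt_0; auto).
  destruct (Hf (Rmin (F / 2) (eps * F * F / 2))) as [d [Hd H]].
  { apply Rmin_pos; [lra|]. apply Rdiv_lt_0_compat; [|lra]. repeat apply Rmult_lt_0_compat; lra. }
  exists d. split; auto. intros w Hw. specialize (H w Hw).
  destruct (lt_Rmin _ _ _ H) as [H1 H2].
  assert (Hfw : F / 2 <= Cmod (f w)) by (apply Cmod_lower; fold F; lra).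
  assert (Hfw0 : f w <> 0%C) by (apply Cmod_gt_0; lra).
  replace (/ f w - / f z)%C with ((f z - f w) / (f w * f z))%C by (field; auto).
  rewrite Cmod_div by (apply Cmult_neq_0; auto). rewrite Cmod_mult, Cmod_sub_sym. fold F.
  apply Rlt_le_trans with ((eps * F * F / 2) / (F / 2 * F)).
  - unfold Rdiv at 1. apply Rle_lt_trans with (Cmod (f w - f z)%C * / (F / 2 * F)).
    + apply Rmult_le_compat_l; [apply Cmod_ge_0|]. apply Rinv_le_contravar; nra.
    + apply Rmult_lt_compat_r; auto. apply Rinv_0_lt_compat. nra.
  - right. field. lra.
Qed.

Lemma ccont_local (f g : C -> C) z r : 0 < r -> (forall w, Cmod (w - z)%C < r -> f w = g w) ->
  ccont f z -> ccont g z.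
Proof.
  intros Hr E H eps Heps. destruct (H eps Heps) as [d [Hd Hw]].
  exists (Rmin d r). split; [apply Rmin_pos; auto|]. intros w Hwz.
  rewrite <- !E.
  - apply Hw. eapply Rlt_le_trans; [apply Hwz|apply Rmin_l].
  - rewrite Cmod_sub_self. lra.
  - eapply Rlt_le_trans; [apply Hwz|apply Rmin_r].
Qed.

Lemma pcont_comp (F : C -> C) (phi : R -> C) t : pcont phi t -> ccont F (phi t) ->
  pcont (fun s => F (phi s)) t.
Proof. exact (ccont_comp F (lift phi) (RtoC t)). Qed.

Lemma pcont_const (c : C) t : pcont (fun _ => c) t.
Proof. apply ccont_const. Qed.

Lemma pcont_plus (f g : R -> C) t : pcont f t -> pcont g t -> pcont (fun s => f s + g s)%C t.
Proof. exact (ccont_plus (lift f) (lift g) (RtoC t)). Qed.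

Lemma pcont_mult (f g : R -> C) t : pcont f t -> pcont g t -> pcont (fun s => f s * g s)%C t.
Proof. exact (ccont_mult (lift f) (lift g) (RtoC t)). Qed.

Lemma pcont_ext (f g : R -> C) t : (forall s, f s = g s) -> pcont f t -> pcont g t.
Proof. intros E. replace g with f; auto. now apply functional_extensionality. Qed.

Lemma pcont_of_components (phi : R -> C) t : continuity_pt (fun s => fst (phi s)) t ->
  continuity_pt (fun s => snd (phi s)) t -> pcont phi t.
Proof.
  intros H1 H2 eps Heps.
  destruct (H1 (eps / 2) ltac:(lra)) as [d1 [Hd1 G1]].
  destruct (H2 (eps / 2) ltac:(lra)) as [d2 [Hd2 G2]].
  exists (Rmin d1 d2). split; [apply Rmin_pos; lra|]. intros w Hw.
  unfold lift. set (s := fst w).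
  assert (Hs : Rabs (s - t) < Rmin d1 d2)
    by (eapply Rle_lt_trans; [|exact Hw]; apply (Rabs_fst_le (w - RtoC t)%C)).
  destruct (Req_dec s t) as [->|Hn]; [rewrite Cmod_sub_self; lra|].
  specialize (G1 s (conj (conj I (not_eq_sym Hn)) (Rlt_le_trans _ _ _ Hs (Rmin_l _ _)))).
  specialize (G2 s (conj (conj I (not_eq_sym Hn)) (Rlt_le_trans _ _ _ Hs (Rmin_r _ _)))).
  simpl in G1, G2. unfold R_dist, Rminus in G1, G2.
  eapply Rle_lt_trans. apply Cmod_le_abs_sum. cbn [fst snd Cminus Cplus Copp RtoC]. lra.
Qed.

Lemma continuous_of_eps_delta (f : R -> R) (x0 : R) :
  (forall eps, 0 < eps -> exists d, 0 < d /\ forall x, Rabs (x - x0) < d -> Rabs (f x - f x0) < eps) ->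
  continuous f x0.
Proof.
  intros H. apply continuity_pt_filterlim. intros eps Heps.
  destruct (H eps Heps) as [d [Hd Hx]]. exists d. split; auto.
  intros x [_ Hxd]. apply Hx. exact Hxd.
Qed.

Lemma pcont_proj (phi : R -> C) t (pr : C -> R) :
  (forall z, Rabs (pr z) <= Cmod z) -> (forall u v, pr (u - v)%C = pr u - pr v) ->
  pcont phi t -> continuous (fun s => pr (phi s)) t.
Proof.
  intros Hc Hl H. apply continuous_of_eps_delta. intros eps Heps.
  destruct (H eps Heps) as [d [Hd Hs]]. exists d. split; auto. intros x Hx.
  rewrite <- Hl. eapply Rle_lt_trans; [apply Hc|]. apply (Hs (RtoC x)).
  replace (RtoC x - RtoC t)%C with (RtoC (x - t)) by (unfold RtoC; apply injective_projections; simpl; ring).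
  rewrite Cmod_R. exact Hx.
Qed.

Lemma pcont_fst (phi : R -> C) t : pcont phi t -> continuous (fun s => fst (phi s)) t.
Proof. apply pcont_proj; [apply Rabs_fst_le|reflexivity]. Qed.

Lemma pcont_snd (phi : R -> C) t : pcont phi t -> continuous (fun s => snd (phi s)) t.
Proof. apply pcont_proj; [apply Rabs_snd_le|reflexivity]. Qed.

Lemma RInt_lin2 (f g : R -> R) (p q a b : R) : ex_RInt f a b -> ex_RInt g a b ->
  RInt (fun x => p * f x + q * g x) a b = p * RInt f a b + q * RInt g a b.
Proof.
  intros Hf Hg. apply is_RInt_unique.
  apply (is_RInt_plus (V := R_NormedModule) (fun x => p * f x) (fun x => q * g x)).
  - apply (is_RInt_scal (V := R_NormedModule) f a b p). apply (RInt_correct (V := R_CompleteNormedModule)); auto.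
  - apply (is_RInt_scal (V := R_NormedModule) g a b q). apply (RInt_correct (V := R_CompleteNormedModule)); auto.
Qed.

Lemma ex_RInt_lin2 (f g : R -> R) (p q a b : R) : ex_RInt f a b -> ex_RInt g a b ->
  ex_RInt (fun x => p * f x + q * g x) a b.
Proof.
  intros Hf Hg.
  apply (ex_RInt_plus (V := R_NormedModule) (fun x => p * f x) (fun x => q * g x)).
  - apply (ex_RInt_scal (V := R_NormedModule) f a b p); auto.
  - apply (ex_RInt_scal (V := R_NormedModule) g a b q); auto.
Qed.

Lemma RInt_scal_l (f : R -> R) (k a b : R) : ex_RInt f a b -> RInt (fun x => k * f x) a b = k * RInt f a b.
Proof.
  intros H. apply is_RInt_unique. apply (is_RInt_scal (V := R_NormedModule) f a b k).
  apply (RInt_correct (V := R_CompleteNormedModule)); auto.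
Qed.

Definition hseg (k : C -> C) (a b y : R) : C :=
  (RInt (fun x => fst (k (x, y))) a b, RInt (fun x => snd (k (x, y))) a b).
Definition vseg (k : C -> C) (c d x : R) : C :=
  (RInt (fun y => fst (k (x, y))) c d, RInt (fun y => snd (k (x, y))) c d).
Definition rect_int (k : C -> C) (a b c d : R) : C :=
  (hseg k a b c + Ci * vseg k c d b - hseg k a b d - Ci * vseg k c d a)%C.

Definition hcont (k : C -> C) (a b y : R) := forall x, a <= x <= b -> ccont k (x, y).
Definition vcont (k : C -> C) (c d x : R) := forall y, c <= y <= d -> ccont k (x, y).
Definition boundary_cont k a b c d := hcont k a b c /\ hcont k a b d /\ vcont k c d a /\ vcont k c d b.

Lemma Cmod_hdiff (x x0 y : R) : Cmod ((x, y) - (x0, y))%C = Rabs (x - x0).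
Proof.
  replace ((x, y) - (x0, y))%C with (RtoC (x - x0)); [apply Cmod_R|].
  unfold RtoC. apply injective_projections; simpl; ring.
Qed.

Lemma Cmod_vdiff (x y y0 : R) : Cmod ((x, y) - (x, y0))%C = Rabs (y - y0).
Proof.
  replace ((x, y) - (x, y0))%C with (Ci * RtoC (y - y0))%C.
  - rewrite Cmod_mult, Cmod_Ci, Cmod_R. ring.
  - unfold RtoC, Ci. apply injective_projections; simpl; ring.
Qed.

Lemma ccont_hline (k : C -> C) (x0 y : R) (pr : C -> R) :
  (forall z, Rabs (pr z) <= Cmod z) -> (forall u v, pr (u - v)%C = pr u - pr v) ->
  ccont k (x0, y) -> continuous (fun x => pr (k (x, y))) x0.
Proof.
  intros Hc Hl H. apply continuous_of_eps_delta. intros eps Heps.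
  destruct (H eps Heps) as [d [Hd Hw]]. exists d. split; auto.
  intros x Hx. rewrite <- Hl. eapply Rle_lt_trans. apply Hc. apply Hw.
  rewrite Cmod_hdiff. exact Hx.
Qed.

Lemma ccont_vline (k : C -> C) (x y0 : R) (pr : C -> R) :
  (forall z, Rabs (pr z) <= Cmod z) -> (forall u v, pr (u - v)%C = pr u - pr v) ->
  ccont k (x, y0) -> continuous (fun y => pr (k (x, y))) y0.
Proof.
  intros Hc Hl H. apply continuous_of_eps_delta. intros eps Heps.
  destruct (H eps Heps) as [d [Hd Hw]]. exists d. split; auto.
  intros y Hy. rewrite <- Hl. eapply Rle_lt_trans. apply Hc. apply Hw.
  rewrite Cmod_vdiff. exact Hy.
Qed.

Lemma hcont_ex (k : C -> C) a b y : a <= b -> hcont k a b y ->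
  ex_RInt (fun x => fst (k (x, y))) a b /\ ex_RInt (fun x => snd (k (x, y))) a b.
Proof.
  intros Hab H. split; apply (ex_RInt_continuous (V := R_CompleteNormedModule)); intros z Hz;
    rewrite Rmin_left, Rmax_right in Hz by lra.
  - apply ccont_hline; [apply Rabs_fst_le|reflexivity|apply H; auto].
  - apply ccont_hline; [apply Rabs_snd_le|reflexivity|apply H; auto].
Qed.

Lemma vcont_ex (k : C -> C) c d x : c <= d -> vcont k c d x ->
  ex_RInt (fun y => fst (k (x, y))) c d /\ ex_RInt (fun y => snd (k (x, y))) c d.
Proof.
  intros Hcd H. split; apply (ex_RInt_continuous (V := R_CompleteNormedModule)); intros z Hz;
    rewrite Rmin_left, Rmax_right in Hz by lra.
  - apply ccont_vline; [apply Rabs_fst_le|reflexivity|apply H; auto].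
  - apply ccont_vline; [apply Rabs_snd_le|reflexivity|apply H; auto].
Qed.

Lemma hcont_sub k a b y a' b' : a <= a' -> b' <= b -> hcont k a b y -> hcont k a' b' y.
Proof. intros H1 H2 H x Hx. apply H. lra. Qed.

Lemma vcont_sub k c d x c' d' : c <= c' -> d' <= d -> vcont k c d x -> vcont k c' d' x.
Proof. intros H1 H2 H y Hy. apply H. lra. Qed.

Lemma hseg_split k a m b y : a <= m <= b -> hcont k a b y ->
  hseg k a b y = (hseg k a m y + hseg k m b y)%C.
Proof.
  intros Hm H.
  destruct (hcont_ex k a m y ltac:(lra) (hcont_sub k a b y a m ltac:(lra) ltac:(lra) H)) as [E1 E2].
  destruct (hcont_ex k m b y ltac:(lra) (hcont_sub k a b y m b ltac:(lra) ltac:(lra) H)) as [E3 E4].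
  unfold hseg. apply injective_projections; simpl; symmetry;
    apply (RInt_Chasles (V := R_CompleteNormedModule)); auto.
Qed.

Lemma vseg_split k c m d x : c <= m <= d -> vcont k c d x ->
  vseg k c d x = (vseg k c m x + vseg k m d x)%C.
Proof.
  intros Hm H.
  destruct (vcont_ex k c m x ltac:(lra) (vcont_sub k c d x c m ltac:(lra) ltac:(lra) H)) as [E1 E2].
  destruct (vcont_ex k m d x ltac:(lra) (vcont_sub k c d x m d ltac:(lra) ltac:(lra) H)) as [E3 E4].
  unfold vseg. apply injective_projections; simpl; symmetry;
    apply (RInt_Chasles (V := R_CompleteNormedModule)); auto.
Qed.

Lemma rect_split_x k a m b c d : a <= m <= b -> hcont k a b c -> hcont k a b d ->
  rect_int k a b c d = (rect_int k a m c d + rect_int k m b c d)%C.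
Proof.
  intros Hm Hc Hd. unfold rect_int.
  rewrite (hseg_split k a m b c Hm Hc), (hseg_split k a m b d Hm Hd). ring.
Qed.

Lemma rect_split_y k a b c m d : c <= m <= d -> vcont k c d a -> vcont k c d b ->
  rect_int k a b c d = (rect_int k a b c m + rect_int k a b m d)%C.
Proof.
  intros Hm Ha Hb. unfold rect_int.
  rewrite (vseg_split k c m d a Hm Ha), (vseg_split k c m d b Hm Hb). ring.
Qed.

Lemma RInt_lin4 (f1 f2 f3 f4 : R -> R) (p1 p2 p3 p4 a b : R) :
  ex_RInt f1 a b -> ex_RInt f2 a b -> ex_RInt f3 a b -> ex_RInt f4 a b ->
  RInt (fun x => 1 * (p1 * f1 x + p2 * f2 x) + 1 * (p3 * f3 x + p4 * f4 x)) a b =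
  p1 * RInt f1 a b + p2 * RInt f2 a b + (p3 * RInt f3 a b + p4 * RInt f4 a b).
Proof.
  intros E1 E2 E3 E4.
  rewrite RInt_lin2 by (apply ex_RInt_lin2; auto).
  rewrite !RInt_lin2 by auto. rewrite !Rmult_1_l. reflexivity.
Qed.

Lemma hseg_lin (k1 k2 : C -> C) (al be : C) a b y : a <= b -> hcont k1 a b y -> hcont k2 a b y ->
  hseg (fun w => al * k1 w + be * k2 w)%C a b y = (al * hseg k1 a b y + be * hseg k2 a b y)%C.
Proof.
  intros Hab H1 H2.
  destruct (hcont_ex k1 a b y Hab H1) as [E1 E2].
  destruct (hcont_ex k2 a b y Hab H2) as [E3 E4].
  unfold hseg. apply injective_projections; simpl.
  - rewrite (RInt_ext _ (fun x => 1 * (fst al * fst (k1 (x, y)) + (- snd al) * snd (k1 (x, y)))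
                                 + 1 * (fst be * fst (k2 (x, y)) + (- snd be) * snd (k2 (x, y)))))
      by (intros; simpl; ring).
    rewrite RInt_lin4 by auto. ring.
  - rewrite (RInt_ext _ (fun x => 1 * (snd al * fst (k1 (x, y)) + fst al * snd (k1 (x, y)))
                                 + 1 * (snd be * fst (k2 (x, y)) + fst be * snd (k2 (x, y)))))
      by (intros; simpl; ring).
    rewrite RInt_lin4 by auto. ring.
Qed.

Lemma vseg_lin (k1 k2 : C -> C) (al be : C) c d x : c <= d -> vcont k1 c d x -> vcont k2 c d x ->
  vseg (fun w => al * k1 w + be * k2 w)%C c d x = (al * vseg k1 c d x + be * vseg k2 c d x)%C.
Proof.
  intros Hcd H1 H2.
  destruct (vcont_ex k1 c d x Hcd H1) as [E1 E2].
  destruct (vcont_ex k2 c d x Hcd H2) as [E3 E4].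
  unfold vseg. apply injective_projections; simpl.
  - rewrite (RInt_ext _ (fun y => 1 * (fst al * fst (k1 (x, y)) + (- snd al) * snd (k1 (x, y)))
                                 + 1 * (fst be * fst (k2 (x, y)) + (- snd be) * snd (k2 (x, y)))))
      by (intros; simpl; ring).
    rewrite RInt_lin4 by auto. ring.
  - rewrite (RInt_ext _ (fun y => 1 * (snd al * fst (k1 (x, y)) + fst al * snd (k1 (x, y)))
                                 + 1 * (snd be * fst (k2 (x, y)) + fst be * snd (k2 (x, y)))))
      by (intros; simpl; ring).
    rewrite RInt_lin4 by auto. ring.
Qed.

Lemma rect_lin (k1 k2 : C -> C) (al be : C) a b c d : a <= b -> c <= d ->
  boundary_cont k1 a b c d -> boundary_cont k2 a b c d ->
  rect_int (fun w => al * k1 w + be * k2 w)%C a b c d =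
  (al * rect_int k1 a b c d + be * rect_int k2 a b c d)%C.
Proof.
  intros Hab Hcd [H1 [H2 [H3 H4]]] [G1 [G2 [G3 G4]]]. unfold rect_int.
  rewrite (hseg_lin k1 k2 al be a b c), (hseg_lin k1 k2 al be a b d),
    (vseg_lin k1 k2 al be c d a), (vseg_lin k1 k2 al be c d b); auto. ring.
Qed.

Lemma rect_ext k1 k2 a b c d : (forall w, k1 w = k2 w) -> rect_int k1 a b c d = rect_int k2 a b c d.
Proof. intros E. replace k2 with k1; auto. now apply functional_extensionality. Qed.

(* Affine functions have a primitive, so their rectangle integrals vanish
   (this is computed explicitly). *)
Lemma RInt_affine (P Q a b : R) : RInt (fun x => P + Q * x) a b = P * (b - a) + Q * (b * b - a * a) / 2.
Proof.
  apply is_RInt_unique.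
  replace (P * (b - a) + Q * (b * b - a * a) / 2) with
    ((fun x => P * x + Q * (x * x) / 2) b - (fun x => P * x + Q * (x * x) / 2) a) by (simpl; field).
  apply (is_RInt_derive (V := R_CompleteNormedModule) (fun x => P * x + Q * (x * x) / 2)).
  - intros x _. auto_derive; auto. field.
  - intros x _. apply (continuous_plus (V := R_NormedModule) (fun _ => P) (fun x => Q * x)).
    + apply continuous_const.
    + apply (continuous_scal_r (V := R_NormedModule) Q (fun x => x)). apply continuous_id.
Qed.

Lemma rect_affine (al be : C) a b c d : rect_int (fun w => al + be * w)%C a b c d = 0%C.
Proof.
  assert (Hh : forall y a b, hseg (fun w => al + be * w)%C a b y =
     ((fst al - snd be * y) * (b - a) + fst be * (b * b - a * a) / 2,
      (snd al + fst be * y) * (b - a) + snd be * (b * b - a * a) / 2)).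
  { intros y a0 b0. unfold hseg. apply injective_projections; simpl; rewrite <- RInt_affine;
      apply RInt_ext; intros; simpl; ring. }
  assert (Hv : forall x c d, vseg (fun w => al + be * w)%C c d x =
     ((fst al + fst be * x) * (d - c) + (- snd be) * (d * d - c * c) / 2,
      (snd al + snd be * x) * (d - c) + fst be * (d * d - c * c) / 2)).
  { intros x c0 d0. unfold vseg. apply injective_projections; simpl; rewrite <- RInt_affine;
      apply RInt_ext; intros; simpl; ring. }
  unfold rect_int. rewrite !Hh, !Hv. unfold Ci. apply injective_projections; simpl; field.
Qed.

(* The standard length-times-sup estimate (with a factor 2 coming from
   estimating real and imaginary parts separately). *)
Lemma hseg_bound k a b y B : a <= b -> hcont k a b y ->
  (forall x, a <= x <= b -> Cmod (k (x, y)) <= B) -> Cmod (hseg k a b y) <= 2 * (b - a) * B.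
Proof.
  intros Hab H HB. destruct (hcont_ex k a b y Hab H) as [E1 E2].
  unfold hseg. eapply Rle_trans. apply Cmod_le_abs_sum. cbn [fst snd].
  assert (A1 := abs_RInt_le_const _ a b B Hab E1 (fun t Ht => Rle_trans _ _ _ (Rabs_fst_le _) (HB t Ht))).
  assert (A2 := abs_RInt_le_const _ a b B Hab E2 (fun t Ht => Rle_trans _ _ _ (Rabs_snd_le _) (HB t Ht))).
  lra.
Qed.

Lemma vseg_bound k c d x B : c <= d -> vcont k c d x ->
  (forall y, c <= y <= d -> Cmod (k (x, y)) <= B) -> Cmod (vseg k c d x) <= 2 * (d - c) * B.
Proof.
  intros Hcd H HB. destruct (vcont_ex k c d x Hcd H) as [E1 E2].
  unfold vseg. eapply Rle_trans. apply Cmod_le_abs_sum. cbn [fst snd].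
  assert (A1 := abs_RInt_le_const _ c d B Hcd E1 (fun t Ht => Rle_trans _ _ _ (Rabs_fst_le _) (HB t Ht))).
  assert (A2 := abs_RInt_le_const _ c d B Hcd E2 (fun t Ht => Rle_trans _ _ _ (Rabs_snd_le _) (HB t Ht))).
  lra.
Qed.

Definition on_boundary (a b c d : R) (w : C) :=
  a <= fst w <= b /\ c <= snd w <= d /\ (fst w = a \/ fst w = b \/ snd w = c \/ snd w = d).

Lemma on_boundary_hside a b c d x y : a <= b -> c <= d -> a <= x <= b -> y = c \/ y = d ->
  on_boundary a b c d (x, y).
Proof. intros Hab Hcd Hx Hy. unfold on_boundary; simpl. destruct Hy as [->| ->]; repeat split; tauto || lra. Qed.

Lemma on_boundary_vside a b c d x y : a <= b -> c <= d -> c <= y <= d -> x = a \/ x = b ->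
  on_boundary a b c d (x, y).
Proof. intros Hab Hcd Hy Hx. unfold on_boundary; simpl. destruct Hx as [->| ->]; repeat split; tauto || lra. Qed.

Lemma boundary_cont_of k a b c d : a <= b -> c <= d ->
  (forall w, on_boundary a b c d w -> ccont k w) -> boundary_cont k a b c d.
Proof.
  intros Hab Hcd H. unfold boundary_cont, hcont, vcont.
  repeat split; intros t Ht; apply H;
    solve [apply on_boundary_hside; auto | apply on_boundary_vside; auto].
Qed.

Lemma rect_bound k a b c d B : a <= b -> c <= d ->
  (forall w, on_boundary a b c d w -> ccont k w) ->
  (forall w, on_boundary a b c d w -> Cmod (k w) <= B) ->
  Cmod (rect_int k a b c d) <= 4 * ((b - a) + (d - c)) * B.
Proof.
  intros Hab Hcd Hc HB.
  destruct (boundary_cont_of k a b c d Hab Hcd Hc) as [H1 [H2 [H3 H4]]].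
  assert (B1 := hseg_bound k a b c B Hab H1 (fun x Hx => HB _ (on_boundary_hside a b c d x c Hab Hcd Hx (or_introl eq_refl)))).
  assert (B2 := hseg_bound k a b d B Hab H2 (fun x Hx => HB _ (on_boundary_hside a b c d x d Hab Hcd Hx (or_intror eq_refl)))).
  assert (B3 := vseg_bound k c d a B Hcd H3 (fun y Hy => HB _ (on_boundary_vside a b c d a y Hab Hcd Hy (or_introl eq_refl)))).
  assert (B4 := vseg_bound k c d b B Hcd H4 (fun y Hy => HB _ (on_boundary_vside a b c d b y Hab Hcd Hy (or_intror eq_refl)))).
  unfold rect_int.
  replace (hseg k a b c + Ci * vseg k c d b - hseg k a b d - Ci * vseg k c d a)%C with
    (hseg k a b c + Ci * vseg k c d b + (- hseg k a b d + - (Ci * vseg k c d a)))%C by ring.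
  eapply Rle_trans. apply Cmod_triangle. eapply Rle_trans. apply Rplus_le_compat; apply Cmod_triangle.
  rewrite !Cmod_opp, !Cmod_mult, Cmod_Ci. lra.
Qed.

(* The
   proof is the classical one: repeatedly keep a quarter carrying at least a
   quarter of the integral, and compare [k] near the limit point with its
   affine approximation. *)
Definition cdiff_on (k : C -> C) (a b c d : R) :=
  forall w : C, a <= fst w <= b -> c <= snd w <= d -> exists l, cderiv k w l.

Lemma cdiff_on_sub k a b c d a' b' c' d' : a <= a' -> b' <= b -> c <= c' -> d' <= d ->
  cdiff_on k a b c d -> cdiff_on k a' b' c' d'.
Proof. intros H1 H2 H3 H4 H w Hw1 Hw2. apply H; lra. Qed.

Lemma cdiff_on_ccont k a b c d : cdiff_on k a b c d ->
  forall w, on_boundary a b c d w -> ccont k w.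
Proof. intros H w [Hw1 [Hw2 _]]. destruct (H w Hw1 Hw2) as [l Hl]. eapply cderiv_cont; eauto. Qed.

Lemma cdiff_on_boundary_cont k a b c d : a <= b -> c <= d -> cdiff_on k a b c d ->
  boundary_cont k a b c d.
Proof. intros Hab Hcd H. apply boundary_cont_of; auto. now apply cdiff_on_ccont. Qed.

Lemma cderiv_affine (al be z : C) : cderiv (fun w => al + be * w)%C z be.
Proof.
  eapply deriv_along_val;
    [|apply (deriv_along_plus _ _ _ _ _ _ (deriv_along_const _ al z)
               (deriv_along_scal _ _ be _ _ (deriv_along_id _ z)))].
  ring.
Qed.

Lemma cdiff_on_affine al be a b c d : cdiff_on (fun w => al + be * w)%C a b c d.
Proof. intros w _ _. exists be. apply cderiv_affine. Qed.

Record box := Box { xlo : R; xhi : R; ylo : R; yhi : R }.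
Definition box_int k (r : box) := rect_int k (xlo r) (xhi r) (ylo r) (yhi r).

Definition xmid r := (xlo r + xhi r) / 2.
Definition ymid r := (ylo r + yhi r) / 2.
Definition quarter_sw r := Box (xlo r) (xmid r) (ylo r) (ymid r).
Definition quarter_se r := Box (xmid r) (xhi r) (ylo r) (ymid r).
Definition quarter_nw r := Box (xlo r) (xmid r) (ymid r) (yhi r).
Definition quarter_ne r := Box (xmid r) (xhi r) (ymid r) (yhi r).

Lemma box_int_quarters k r : xlo r <= xhi r -> ylo r <= yhi r ->
  cdiff_on k (xlo r) (xhi r) (ylo r) (yhi r) ->
  box_int k r = (box_int k (quarter_sw r) + box_int k (quarter_se r)
                 + box_int k (quarter_nw r) + box_int k (quarter_ne r))%C.
Proof.
  destruct r as [a b c d]. unfold box_int, quarter_sw, quarter_se, quarter_nw, quarter_ne, xmid, ymid.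
  simpl. intros Hab Hcd H.
  set (m := (a + b) / 2). set (n := (c + d) / 2).
  assert (Hm : a <= m <= b) by (unfold m; lra).
  assert (Hn : c <= n <= d) by (unfold n; lra).
  destruct (cdiff_on_boundary_cont k a b c d Hab Hcd H) as [H1 [H2 _]].
  rewrite (rect_split_x k a m b c d Hm H1 H2).
  destruct (cdiff_on_boundary_cont k a m c d ltac:(lra) Hcd
              (cdiff_on_sub k a b c d a m c d ltac:(lra) ltac:(lra) ltac:(lra) ltac:(lra) H)) as [_ [_ [G3 G4]]].
  destruct (cdiff_on_boundary_cont k m b c d ltac:(lra) Hcd
              (cdiff_on_sub k a b c d m b c d ltac:(lra) ltac:(lra) ltac:(lra) ltac:(lra) H)) as [_ [_ [F3 F4]]].
  rewrite (rect_split_y k a m c n d Hn G3 G4), (rect_split_y k m b c n d Hn F3 F4). ring.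
Qed.

Definition heavy_quarter k r :=
  if Rle_dec (Cmod (box_int k r) / 4) (Cmod (box_int k (quarter_sw r))) then quarter_sw r
  else if Rle_dec (Cmod (box_int k r) / 4) (Cmod (box_int k (quarter_se r))) then quarter_se r
  else if Rle_dec (Cmod (box_int k r) / 4) (Cmod (box_int k (quarter_nw r))) then quarter_nw r
  else quarter_ne r.

Lemma heavy_quarter_big k r : xlo r <= xhi r -> ylo r <= yhi r ->
  cdiff_on k (xlo r) (xhi r) (ylo r) (yhi r) ->
  Cmod (box_int k r) / 4 <= Cmod (box_int k (heavy_quarter k r)).
Proof.
  intros Hab Hcd H. unfold heavy_quarter.
  destruct (Rle_dec _ _) as [E1|E1]; auto.
  destruct (Rle_dec _ _) as [E2|E2]; auto.
  destruct (Rle_dec _ _) as [E3|E3]; auto.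
  destruct (Rle_dec (Cmod (box_int k r) / 4) (Cmod (box_int k (quarter_ne r)))) as [E4|E4]; auto.
  exfalso. rewrite (box_int_quarters k r Hab Hcd H) in E1, E2, E3, E4.
  set (x1 := box_int k (quarter_sw r)) in *. set (x2 := box_int k (quarter_se r)) in *.
  set (x3 := box_int k (quarter_nw r)) in *. set (x4 := box_int k (quarter_ne r)) in *.
  pose proof (Cmod_triangle (x1 + x2 + x3) x4). pose proof (Cmod_triangle (x1 + x2) x3).
  pose proof (Cmod_triangle x1 x2). lra.
Qed.

Definition half_subbox (r p : box) :=
  xlo r <= xlo p /\ xhi p <= xhi r /\ ylo r <= ylo p /\ yhi p <= yhi r /\
  xhi p - xlo p = (xhi r - xlo r) / 2 /\ yhi p - ylo p = (yhi r - ylo r) / 2.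

Lemma heavy_quarter_half k r : xlo r <= xhi r -> ylo r <= yhi r -> half_subbox r (heavy_quarter k r).
Proof.
  intros Hab Hcd. unfold heavy_quarter, half_subbox, quarter_sw, quarter_se, quarter_nw, quarter_ne, xmid, ymid.
  repeat destruct (Rle_dec _ _); simpl; repeat split; lra.
Qed.

Fixpoint goursat_boxes k (r0 : box) (n : nat) : box :=
  match n with O => r0 | S n => heavy_quarter k (goursat_boxes k r0 n) end.

Lemma goursat_boxes_props k r0 n : xlo r0 <= xhi r0 -> ylo r0 <= yhi r0 ->
  let r := goursat_boxes k r0 n in
  xlo r0 <= xlo r /\ xlo r <= xhi r /\ xhi r <= xhi r0 /\
  ylo r0 <= ylo r /\ ylo r <= yhi r /\ yhi r <= yhi r0 /\
  xhi r - xlo r = (xhi r0 - xlo r0) / 2 ^ n /\ yhi r - ylo r = (yhi r0 - ylo r0) / 2 ^ n.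
Proof.
  intros Hab Hcd. induction n as [|n IH]; simpl.
  - repeat split; try lra; field.
  - destruct IH as [I1 [I2 [I3 [I4 [I5 [I6 [I7 I8]]]]]]].
    destruct (heavy_quarter_half k (goursat_boxes k r0 n) I2 I5) as [J1 [J2 [J3 [J4 [J5 J6]]]]].
    assert (0 < 2 ^ n) by (apply pow_lt; lra).
    repeat split; try lra.
    + rewrite J5, I7. field. lra.
    + rewrite J6, I8. field. lra.
Qed.

Lemma goursat_boxes_mono k r0 n m : xlo r0 <= xhi r0 -> ylo r0 <= yhi r0 -> (n <= m)%nat ->
  xlo (goursat_boxes k r0 n) <= xlo (goursat_boxes k r0 m) /\
  xhi (goursat_boxes k r0 m) <= xhi (goursat_boxes k r0 n) /\
  ylo (goursat_boxes k r0 n) <= ylo (goursat_boxes k r0 m) /\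
  yhi (goursat_boxes k r0 m) <= yhi (goursat_boxes k r0 n).
Proof.
  intros Hab Hcd Hnm. induction Hnm as [|m _ IH]; [lra|].
  destruct (goursat_boxes_props k r0 m Hab Hcd) as [_ [I2 [_ [_ [I5 _]]]]].
  destruct (heavy_quarter_half k (goursat_boxes k r0 m) I2 I5) as [J1 [J2 [J3 [J4 _]]]].
  simpl. lra.
Qed.

Lemma goursat_boxes_big k r0 n : xlo r0 <= xhi r0 -> ylo r0 <= yhi r0 ->
  cdiff_on k (xlo r0) (xhi r0) (ylo r0) (yhi r0) ->
  Cmod (box_int k r0) / 4 ^ n <= Cmod (box_int k (goursat_boxes k r0 n)).
Proof.
  intros Hab Hcd H. induction n as [|n IH]; simpl; [lra|].
  destruct (goursat_boxes_props k r0 n Hab Hcd) as [I1 [I2 [I3 [I4 [I5 [I6 _]]]]]].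
  pose proof (heavy_quarter_big k (goursat_boxes k r0 n) I2 I5
                (cdiff_on_sub _ _ _ _ _ _ _ _ _ I1 I3 I4 I6 H)).
  assert (0 < 4 ^ n) by (apply pow_lt; lra).
  replace (Cmod (box_int k r0) / (4 * 4 ^ n)) with (Cmod (box_int k r0) / 4 ^ n / 4) by (field; lra).
  lra.
Qed.

Lemma nested_intervals (lo hi : nat -> R) :
  (forall n, lo n <= hi n) -> (forall n m, (n <= m)%nat -> lo n <= lo m /\ hi m <= hi n) ->
  exists p, forall n, lo n <= p <= hi n.
Proof.
  intros Hle Hmono.
  destruct (completeness (fun x => exists n, x = lo n)) as [p [Hub Hleast]].
  { exists (hi O). intros x [n ->]. pose proof (Hmono O n (Nat.le_0_l n)). pose proof (Hle n). lra. }
  { exists (lo O). exists O. reflexivity. }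
  exists p. intros n. split; [apply Hub; now exists n|].
  apply Hleast. intros x [m ->]. destruct (Nat.le_ge_cases n m) as [Hnm|Hmn].
  - destruct (Hmono n m Hnm). pose proof (Hle m). lra.
  - destruct (Hmono m n Hmn). pose proof (Hle n). lra.
Qed.

Lemma small_pow x d : 0 < d -> exists n, x / 2 ^ n < d.
Proof.
  intros Hd.
  assert (Hq : 0 < d / (Rabs x + 1)) by (apply Rdiv_lt_0_compat; pose proof (Rabs_pos x); lra).
  destruct (pow_lt_1_zero (/ 2) ltac:(rewrite Rabs_pos_eq; lra) _ Hq) as [n Hn].
  exists n. specialize (Hn n (Nat.le_refl n)).
  assert (H2 : 0 < (/ 2) ^ n) by (apply pow_lt; lra).
  rewrite Rabs_pos_eq in Hn by lra.
  unfold Rdiv. rewrite <- pow_inv.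
  apply Rle_lt_trans with (Rabs x * (/ 2) ^ n); [apply Rmult_le_compat_r; [lra|apply Rle_abs]|].
  apply (Rmult_lt_compat_l (Rabs x + 1)) in Hn; [|pose proof (Rabs_pos x); lra].
  replace ((Rabs x + 1) * (d / (Rabs x + 1))) with d in Hn by (field; pose proof (Rabs_pos x); lra).
  nra.
Qed.

(* Near a point [p] where [k] has derivative [l], the integral over a small
   box containing [p] is that of the remainder k w - k p - l (w - p), since
   affine functions integrate to zero; this gives a bound quadratic in the
   size of the box. *)
Lemma rect_int_near_point k l (p : C) a b c d eps del :
  a <= fst p <= b -> c <= snd p <= d -> cdiff_on k a b c d -> 0 < del ->
  (forall h : C, Cmod h < del -> Cmod (k (p + h) - k p - l * h)%C <= eps * Cmod h) ->
  (b - a) + (d - c) < del -> 0 <= eps ->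
  Cmod (rect_int k a b c d) <= 4 * ((b - a) + (d - c)) * (eps * ((b - a) + (d - c))).
Proof.
  intros Hp1 Hp2 Hk Hdel Hl Hsz Heps.
  set (phi := fun w : C => (1 * k w + (-1) * ((k p - l * p) + l * w))%C).
  assert (Hphi : rect_int k a b c d = rect_int phi a b c d).
  { unfold phi. rewrite rect_lin; try lra.
    - rewrite rect_affine. ring.
    - apply cdiff_on_boundary_cont; auto; lra.
    - apply cdiff_on_boundary_cont; [lra|lra|apply cdiff_on_affine]. }
  rewrite Hphi. apply rect_bound; try lra.
  - intros w Hw. apply (cdiff_on_ccont phi a b c d); auto.
    intros v Hv1 Hv2. destruct (Hk v Hv1 Hv2) as [l1 Hl1]. exists (1 * l1 + -1 * l)%C.
    apply deriv_along_plus; apply deriv_along_scal; auto. apply cderiv_affine.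
  - intros w [Hw1 [Hw2 _]].
    assert (Hh : Cmod (w - p)%C <= (b - a) + (d - c)).
    { eapply Rle_trans. apply Cmod_le_abs_sum. simpl. unfold Rabs; repeat destruct Rcase_abs; lra. }
    replace (phi w) with (k (p + (w - p)) - k p - l * (w - p))%C.
    + eapply Rle_trans; [apply Hl; lra|]. apply Rmult_le_compat_l; lra.
    + unfold phi. replace (p + (w - p))%C with w by ring. ring.
Qed.

Lemma goursat_boxes_point k r0 : xlo r0 <= xhi r0 -> ylo r0 <= yhi r0 ->
  exists p : C, forall n, xlo (goursat_boxes k r0 n) <= fst p <= xhi (goursat_boxes k r0 n) /\
                          ylo (goursat_boxes k r0 n) <= snd p <= yhi (goursat_boxes k r0 n).
Proof.
  intros Hab Hcd.
  assert (P := fun n => goursat_boxes_props k r0 n Hab Hcd).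
  assert (Mo := fun n m => goursat_boxes_mono k r0 n m Hab Hcd).
  simpl in P.
  destruct (nested_intervals (fun n => xlo (goursat_boxes k r0 n)) (fun n => xhi (goursat_boxes k r0 n)))
    as [p1 Hp1]; [intros n; apply P|intros n m Hnm; destruct (Mo n m Hnm) as [? [? _]]; auto|].
  destruct (nested_intervals (fun n => ylo (goursat_boxes k r0 n)) (fun n => yhi (goursat_boxes k r0 n)))
    as [p2 Hp2]; [intros n; apply P|intros n m Hnm; destruct (Mo n m Hnm) as [_ [_ [? ?]]]; auto|].
  exists (p1, p2). intros n. split; [apply Hp1|apply Hp2].
Qed.

(* The n-th box has integral at least V / 4^n and, near the common point,
   at most 4 eps (L / 2^n)^2, where V is the modulus of the integral and L
   the half-perimeter; for eps small this forces V = 0. *)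
Theorem goursat k a b c d : a <= b -> c <= d -> cdiff_on k a b c d -> rect_int k a b c d = 0%C.
Proof.
  intros Hab Hcd H.
  set (r0 := Box a b c d). set (V := Cmod (rect_int k a b c d)).
  destruct (Req_dec V 0) as [E|E]; [apply Cmod_eq_0; auto|]. exfalso.
  assert (HV : 0 < V) by (pose proof (Cmod_ge_0 (rect_int k a b c d)); unfold V in *; lra).
  destruct (goursat_boxes_point k r0 Hab Hcd) as [p Hp].
  destruct (H p) as [l Hl]; [specialize (Hp O); simpl in *; lra..|].
  set (L := (b - a) + (d - c)). assert (HLL : 0 <= L * L) by nra.
  set (eps := V / (8 * L * L + 1)).
  assert (Heps : 0 < eps) by (unfold eps; apply Rdiv_lt_0_compat; lra).
  assert (Heps_def : eps * (8 * L * L + 1) = V) by (unfold eps; field; lra).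
  destruct (Hl eps Heps) as [del [Hdel Hk]].
  destruct (small_pow L del Hdel) as [n Hn].
  set (rn := goursat_boxes k r0 n).
  destruct (goursat_boxes_props k r0 n Hab Hcd) as [I1 [_ [I3 [I4 [_ [I6 [I7 I8]]]]]]]. fold rn in I1, I3, I4, I6, I7, I8.
  simpl in I1, I3, I4, I6, I7, I8.
  assert (H2n : 0 < 2 ^ n) by (apply pow_lt; lra).
  assert (Hsz : (xhi rn - xlo rn) + (yhi rn - ylo rn) = L / 2 ^ n) by (rewrite I7, I8; unfold L; field; lra).
  assert (Hsmall := rect_int_near_point k l p (xlo rn) (xhi rn) (ylo rn) (yhi rn) eps del
                      (proj1 (Hp n)) (proj2 (Hp n)) (cdiff_on_sub _ _ _ _ _ _ _ _ _ I1 I3 I4 I6 H) Hdel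
                      (fun h Hh => Hk h I Hh) ltac:(rewrite Hsz; exact Hn) ltac:(lra)).
  fold (box_int k rn) in Hsmall. rewrite Hsz in Hsmall.
  assert (Hbig := goursat_boxes_big k r0 n Hab Hcd H). fold rn in Hbig.
  change (box_int k r0) with (rect_int k a b c d) in Hbig. fold V in Hbig.
  assert (H4n : 4 ^ n = 2 ^ n * 2 ^ n) by (rewrite <- Rpow_mult_distr; f_equal; lra).
  assert (Hfin : V <= 4 * eps * (L * L)).
  { assert (Hq : V * / 4 ^ n <= 4 * eps * (L * L) * / 4 ^ n).
    { replace (4 * eps * (L * L) * / 4 ^ n) with (4 * (L / 2 ^ n) * (eps * (L / 2 ^ n))) by (rewrite H4n; field; lra).
      lra. }
    apply Rmult_le_reg_r with (/ 4 ^ n); [apply Rinv_0_lt_compat; rewrite H4n; nra|exact Hq]. }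
  nra.
Qed.

Section SquareGeometry.
Variables (u0 v0 rho : R).
Hypothesis Hrho : 0 < rho.
Let z0 : C := (u0, v0).
Let a := u0 - rho.
Let b := u0 + rho.
Let c := v0 - rho.
Let d := v0 + rho.

Lemma square_boundary_dist (w : C) : on_boundary a b c d w ->
  rho <= Cmod (w - z0)%C /\ Cmod (w - z0)%C <= 2 * rho.
Proof.
  unfold on_boundary, a, b, c, d, z0. intros [H1 [H2 H3]]. split.
  - destruct H3 as [E|[E|[E|E]]];
      [eapply Rle_trans; [|apply Rabs_fst_le] | eapply Rle_trans; [|apply Rabs_fst_le]
      |eapply Rle_trans; [|apply Rabs_snd_le] | eapply Rle_trans; [|apply Rabs_snd_le]];
      simpl; rewrite E; unfold Rabs; destruct Rcase_abs; lra.
  - eapply Rle_trans. apply Cmod_le_abs_sum. simpl. unfold Rabs; repeat destruct Rcase_abs; lra.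
Qed.

Lemma square_boundary_dist_near (w z : C) : on_boundary a b c d w -> Cmod (z - z0)%C < rho / 2 ->
  rho / 2 <= Cmod (w - z)%C /\ Cmod (w - z)%C <= 3 * rho.
Proof.
  intros Hw Hz. destruct (square_boundary_dist w Hw) as [H1 H2].
  pose proof (Cmod_triangle (w - z) (z - z0)) as T1. pose proof (Cmod_triangle (w - z0) (z0 - z)) as T2.
  replace (w - z + (z - z0))%C with (w - z0)%C in T1 by ring.
  replace (w - z0 + (z0 - z))%C with (w - z)%C in T2 by ring.
  rewrite (Cmod_sub_sym z0 z) in T2. lra.
Qed.

Lemma near_center_inside (z : C) : Cmod (z - z0)%C < rho / 2 -> a < fst z < b /\ c < snd z < d.
Proof.
  intros H. pose proof (Rabs_fst_le (z - z0)%C). pose proof (Rabs_snd_le (z - z0)%C).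
  unfold a, b, c, d, z0 in *. simpl in *. unfold Rabs in *; repeat destruct Rcase_abs; lra.
Qed.

Lemma near_center_off_boundary (w z : C) : on_boundary a b c d w -> Cmod (z - z0)%C < rho / 2 -> w <> z.
Proof.
  intros Hw Hz E. destruct (square_boundary_dist_near w z Hw Hz) as [H1 _].
  rewrite E, Cmod_sub_self in H1. lra.
Qed.

End SquareGeometry.

Lemma Cmod_zero_le (x : C) : (forall eps, 0 < eps -> Cmod x <= eps) -> x = 0%C.
Proof.
  intros H. apply Cmod_eq_0. pose proof (Cmod_ge_0 x).
  destruct (Req_dec (Cmod x) 0) as [E|E]; auto.
  specialize (H (Cmod x / 2) ltac:(lra)). lra.
Qed.

(* If [k] is differentiable on a rectangle except at an interior point [z],
   the rectangle integral equals that over any small square centred at [z]: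
   the four remaining pieces integrate to zero by Goursat's theorem. *)
Lemma rect_int_shrink k a b c d z1 z2 r : 0 < r ->
  a <= z1 - r -> z1 + r <= b -> c <= z2 - r -> z2 + r <= d ->
  (forall w : C, a <= fst w <= b -> c <= snd w <= d -> w <> (z1, z2) -> exists l, cderiv k w l) ->
  rect_int k a b c d = rect_int k (z1 - r) (z1 + r) (z2 - r) (z2 + r).
Proof.
  intros Hr H1 H2 H3 H4 HD.
  set (x1 := z1 - r). set (x2 := z1 + r). set (y1 := z2 - r). set (y2 := z2 + r).
  assert (Hcw : forall w : C, a <= fst w <= b -> c <= snd w <= d -> w <> (z1, z2) -> ccont k w).
  { intros w Hw1 Hw2 Hw3. destruct (HD w Hw1 Hw2 Hw3) as [l Hl]. eapply cderiv_cont; eauto. }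
  assert (Hav : forall a' b' c' d', a <= a' -> b' <= b -> c <= c' -> d' <= d ->
     (b' < z1 \/ z1 < a' \/ d' < z2 \/ z2 < c') -> cdiff_on k a' b' c' d').
  { intros a' b' c' d' G1 G2 G3 G4 G5 w Hw1 Hw2. apply HD; try lra. intros ->. simpl in *. lra. }
  assert (HhC : forall y u v, a <= u -> v <= b -> c <= y <= d -> y <> z2 -> hcont k u v y).
  { intros y u v G1 G2 G3 G4 x Hx. apply Hcw; simpl; try lra. intros E. inversion E. lra. }
  assert (HvC : forall x u v, c <= u -> v <= d -> a <= x <= b -> x <> z1 -> vcont k u v x).
  { intros x u v G1 G2 G3 G4 y Hy. apply Hcw; simpl; try lra. intros E. inversion E. lra. }
  rewrite (rect_split_x k a x1 b c d) by (try apply HhC; unfold x1; lra).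
  rewrite (rect_split_x k x1 x2 b c d) by (try apply HhC; unfold x1, x2; lra).
  rewrite (rect_split_y k x1 x2 c y1 d) by (try apply HvC; unfold x1, x2, y1; lra).
  rewrite (rect_split_y k x1 x2 y1 y2 d) by (try apply HvC; unfold x1, x2, y1, y2; lra).
  rewrite (goursat k a x1 c d), (goursat k x2 b c d), (goursat k x1 x2 c y1), (goursat k x1 x2 y2 d);
    try (apply Hav; unfold x1, x2, y1, y2; lra); try (unfold x1, x2, y1, y2; lra).
  ring.
Qed.

(* Goursat's theorem with an exceptional point [z] at which (w - z) k(w)
   tends to 0: the integral over a square of half-side [r] around [z] is at
   most the perimeter 8r times sup |k| <= eps / r (up to constants). *)
Theorem goursat_exceptional k a b c d (z : C) :
  a < fst z < b -> c < snd z < d ->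
  (forall w : C, a <= fst w <= b -> c <= snd w <= d -> w <> z -> exists l, cderiv k w l) ->
  (forall eps, 0 < eps -> exists del, 0 < del /\ forall w : C, w <> z -> Cmod (w - z)%C < del ->
       Cmod ((w - z) * k w)%C <= eps) ->
  rect_int k a b c d = 0%C.
Proof.
  intros Hz1 Hz2 HD Hlim. destruct z as [z1 z2]. simpl in Hz1, Hz2.
  apply Cmod_zero_le. intros eps Heps.
  destruct (Hlim (eps / 16) ltac:(lra)) as [del [Hdel Hk]].
  set (m := Rmin (Rmin (z1 - a) (b - z1)) (Rmin (z2 - c) (d - z2))).
  assert (Hm : 0 < m /\ m <= z1 - a /\ m <= b - z1 /\ m <= z2 - c /\ m <= d - z2).
  { unfold m.
    pose proof (Rmin_l (Rmin (z1 - a) (b - z1)) (Rmin (z2 - c) (d - z2))).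
    pose proof (Rmin_r (Rmin (z1 - a) (b - z1)) (Rmin (z2 - c) (d - z2))).
    pose proof (Rmin_l (z1 - a) (b - z1)). pose proof (Rmin_r (z1 - a) (b - z1)).
    pose proof (Rmin_l (z2 - c) (d - z2)). pose proof (Rmin_r (z2 - c) (d - z2)).
    repeat split; try lra. repeat apply Rmin_pos; lra. }
  set (r := Rmin (del / 4) (m / 2)).
  assert (Hr : 0 < r) by (unfold r; apply Rmin_pos; lra).
  assert (Hr1 : r <= del / 4) by apply Rmin_l.
  assert (Hr2 : r <= m / 2) by apply Rmin_r.
  rewrite (rect_int_shrink k a b c d z1 z2 r) by (auto; lra).
  assert (Hbd : forall w, on_boundary (z1 - r) (z1 + r) (z2 - r) (z2 + r) w ->
     w <> (z1, z2) /\ Cmod (k w) <= eps / 16 / r).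
  { intros w Hw. destruct (square_boundary_dist z1 z2 r Hr w Hw) as [Hge Hle].
    assert (Hne : w <> (z1, z2)) by (intros ->; rewrite Cmod_sub_self in Hge; lra).
    split; auto.
    specialize (Hk w Hne ltac:(lra)). rewrite Cmod_mult in Hk.
    apply Rmult_le_reg_l with (Cmod (w - (z1, z2))%C); [lra|].
    apply Rle_trans with (eps / 16); auto.
    apply Rle_trans with (r * (eps / 16 / r)); [right; field; lra|].
    apply Rmult_le_compat_r; auto. apply Rlt_le, Rdiv_lt_0_compat; lra. }
  eapply Rle_trans.
  - apply rect_bound; try lra.
    + intros w Hw. destruct (Hbd w Hw) as [Hne _]. destruct Hw as [Hw1 [Hw2 _]].
      destruct (HD w ltac:(lra) ltac:(lra) Hne) as [l Hl]. eapply cderiv_cont; eauto.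
    + intros w Hw. apply (Hbd w Hw).
  - right. field. lra.
Qed.

Lemma cderiv_sub_const (f : C -> C) (z l c : C) : cderiv f z l -> cderiv (fun w => f w - c)%C z l.
Proof.
  intros H. eapply deriv_along_val; [|exact (deriv_along_plus _ _ _ _ _ _ H (deriv_along_const _ (- c)%C z))].
  ring.
Qed.

Lemma sub_neq0 (w z : C) : w <> z -> (w - z)%C <> 0%C.
Proof. intros H E. apply H. replace w with ((w - z) + z)%C by ring. rewrite E. ring. Qed.

Lemma ccont_inv_sub (z w : C) : w <> z -> ccont (fun w => / (w - z))%C w.
Proof.
  intros H. apply (ccont_inv (fun w => w - z)%C); [|now apply sub_neq0].
  apply (ccont_plus (fun w => w) (fun _ => - z)%C); [apply ccont_id|apply ccont_const].
Qed.

Lemma ccont_inv_sq_sub (z w : C) : w <> z -> ccont (fun w => / ((w - z) * (w - z)))%C w.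
Proof.
  intros H. apply (ccont_inv (fun w => (w - z) * (w - z))%C);
    [|apply Cmult_neq_0; now apply sub_neq0].
  apply (ccont_mult (fun w => w - z)%C (fun w => w - z)%C);
    apply (ccont_plus (fun w => w) (fun _ => - z)%C); (apply ccont_id || apply ccont_const).
Qed.

(* The Cauchy-type integrals over a fixed square, as functions of a point [z]
   near its centre [z0]: they are continuous, and they express the derivative
   of a holomorphic function, whence its continuity. *)
Section CauchyRepresentation.
Variables (u0 v0 rho : R).
Hypothesis Hrho : 0 < rho.
Let z0 : C := (u0, v0).
Let a := u0 - rho.
Let b := u0 + rho.
Let c := v0 - rho.
Let d := v0 + rho.

Let Hab : a <= b. Proof. unfold a, b. lra. Qed.
Let Hcd : c <= d. Proof. unfold c, d. lra. Qed.

Lemma center_near : Cmod (z0 - z0)%C < rho / 2.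
Proof. rewrite Cmod_sub_self. lra. Qed.

Lemma rect_int_param_cont (K : C -> C -> C) (L : R) :
  (forall z, Cmod (z - z0)%C < rho / 2 -> forall w, on_boundary a b c d w -> ccont (K z) w) ->
  (forall z, Cmod (z - z0)%C < rho / 2 -> forall w, on_boundary a b c d w ->
     Cmod (K z w - K z0 w)%C <= L * Cmod (z - z0)%C) ->
  ccont (fun z => rect_int (K z) a b c d) z0.
Proof.
  intros HK HL eps Heps.
  set (M := 16 * rho * Rabs L + 1).
  assert (HM : 0 < M) by (unfold M; pose proof (Rabs_pos L); nra).
  exists (Rmin (rho / 2) (eps / M)). split; [apply Rmin_pos; [lra|apply Rdiv_lt_0_compat; auto]|].
  intros z Hz.
  destruct (lt_Rmin _ _ _ Hz) as [Hz1 Hz2].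
  assert (Hdiff : (rect_int (K z) a b c d - rect_int (K z0) a b c d)%C =
                  rect_int (fun w => 1 * K z w + (-1) * K z0 w)%C a b c d).
  { rewrite rect_lin; auto; [ring|..]; apply boundary_cont_of; auto; apply HK; auto. apply center_near. }
  rewrite Hdiff. eapply Rle_lt_trans.
  - apply rect_bound with (B := Rabs L * Cmod (z - z0)%C); auto.
    + intros w Hw. apply (ccont_plus (fun w => 1 * K z w)%C (fun w => -1 * K z0 w)%C);
        apply (ccont_mult (fun _ => _)); try apply ccont_const; apply HK; auto. apply center_near.
    + intros w Hw.
      replace (1 * K z w + -1 * K z0 w)%C with (K z w - K z0 w)%C by ring.
      eapply Rle_trans; [apply HL; auto|]. apply Rmult_le_compat_r; [apply Cmod_ge_0|apply Rle_abs].
  - unfold a, b, c, d.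
    replace (4 * (u0 + rho - (u0 - rho) + (v0 + rho - (v0 - rho))) * (Rabs L * Cmod (z - z0)%C))
      with ((M - 1) * Cmod (z - z0)%C) by (unfold M; ring).
    pose proof (Cmod_ge_0 (z - z0)%C).
    apply Rle_lt_trans with (M * Cmod (z - z0)%C); [nra|].
    apply (Rmult_lt_compat_l M) in Hz2; auto. replace (M * (eps / M)) with eps in Hz2 by (field; lra). lra.
Qed.

Lemma inv_lipschitz (w z : C) : on_boundary a b c d w -> Cmod (z - z0)%C < rho / 2 ->
  Cmod (/ (w - z) - / (w - z0))%C <= 4 / (rho * rho) * Cmod (z - z0)%C.
Proof.
  intros Hw Hz.
  destruct (square_boundary_dist_near u0 v0 rho Hrho w z Hw Hz) as [H1 H2].
  destruct (square_boundary_dist u0 v0 rho Hrho w Hw) as [H3 H4]. fold z0 in H3, H4.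
  assert (Hu : (w - z)%C <> 0%C) by (apply Cmod_gt_0; lra).
  assert (Hv : (w - z0)%C <> 0%C) by (apply Cmod_gt_0; lra).
  replace (/ (w - z) - / (w - z0))%C with ((z - z0) / ((w - z) * (w - z0)))%C by (field; auto).
  rewrite Cmod_div by (apply Cmult_neq_0; auto). rewrite Cmod_mult.
  pose proof (Cmod_ge_0 (z - z0)%C).
  unfold Rdiv. apply Rle_trans with (Cmod (z - z0)%C * / (rho / 2 * rho)).
  - apply Rmult_le_compat_l; auto. apply Rinv_le_contravar; [nra|]. apply Rmult_le_compat; lra.
  - replace (Cmod (z - z0)%C * / (rho / 2 * rho)) with (2 / (rho * rho) * Cmod (z - z0)%C) by (field; lra).
    apply Rmult_le_compat_r; auto. unfold Rdiv. apply Rmult_le_compat_r; [|lra].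
    apply Rlt_le, Rinv_0_lt_compat. nra.
Qed.

Lemma inv_sq_lipschitz (w z : C) : on_boundary a b c d w -> Cmod (z - z0)%C < rho / 2 ->
  Cmod (/ ((w - z) * (w - z)) - / ((w - z0) * (w - z0)))%C <= 20 / (rho * rho * rho) * Cmod (z - z0)%C.
Proof.
  intros Hw Hz.
  destruct (square_boundary_dist_near u0 v0 rho Hrho w z Hw Hz) as [H1 H2].
  destruct (square_boundary_dist u0 v0 rho Hrho w Hw) as [H3 H4]. fold z0 in H3, H4.
  assert (Hu : (w - z)%C <> 0%C) by (apply Cmod_gt_0; lra).
  assert (Hv : (w - z0)%C <> 0%C) by (apply Cmod_gt_0; lra).
  replace (/ ((w - z) * (w - z)) - / ((w - z0) * (w - z0)))%C with
    ((z - z0) * ((w - z0) + (w - z)) / ((w - z) * (w - z) * ((w - z0) * (w - z0))))%C by (field; auto).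
  rewrite Cmod_div by (repeat apply Cmult_neq_0; auto). rewrite !Cmod_mult.
  set (U := Cmod (w - z)%C) in *. set (V := Cmod (w - z0)%C) in *.
  assert (HS : Cmod (w - z0 + (w - z))%C <= 5 * rho) by (eapply Rle_trans; [apply Cmod_triangle|]; fold U V; lra).
  pose proof (Cmod_ge_0 (z - z0)%C). pose proof (Cmod_ge_0 (w - z0 + (w - z))%C).
  assert (HUV : rho * rho * rho * rho / 4 <= U * U * (V * V)).
  { replace (rho * rho * rho * rho / 4) with (rho / 2 * (rho / 2) * (rho * rho)) by field.
    apply Rmult_le_compat; nra. }
  assert (Hp : 0 < rho * rho * rho * rho / 4)
    by (apply Rdiv_lt_0_compat; [repeat apply Rmult_lt_0_compat|]; lra).
  unfold Rdiv. apply Rle_trans with (Cmod (z - z0)%C * (5 * rho) * / (rho * rho * rho * rho / 4)).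
  - apply Rmult_le_compat; [apply Rmult_le_pos; auto|apply Rlt_le, Rinv_0_lt_compat; lra| |].
    + apply Rmult_le_compat_l; auto.
    + apply Rinv_le_contravar; [lra|exact HUV].
  - right. field. lra.
Qed.

Definition int_inv (z : C) := rect_int (fun w => / (w - z))%C a b c d.
Definition int_inv_sq (z : C) := rect_int (fun w => / ((w - z) * (w - z)))%C a b c d.
Definition int_f_inv_sq (f : C -> C) (z : C) := rect_int (fun w => f w * / ((w - z) * (w - z)))%C a b c d.

Lemma int_inv_cont : ccont int_inv z0.
Proof.
  apply (rect_int_param_cont (fun z w => / (w - z))%C (4 / (rho * rho))).
  - intros z Hz w Hw. apply ccont_inv_sub. eapply near_center_off_boundary; eauto.
  - intros z Hz w Hw. apply inv_lipschitz; auto.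
Qed.

Lemma int_inv_sq_cont : ccont int_inv_sq z0.
Proof.
  apply (rect_int_param_cont (fun z w => / ((w - z) * (w - z)))%C (20 / (rho * rho * rho))).
  - intros z Hz w Hw. apply ccont_inv_sq_sub. eapply near_center_off_boundary; eauto.
  - intros z Hz w Hw. apply inv_sq_lipschitz; auto.
Qed.

Lemma int_f_inv_sq_cont (f : C -> C) (Bf : R) : (forall w, on_boundary a b c d w -> ccont f w) ->
  (forall w, on_boundary a b c d w -> Cmod (f w) <= Bf) -> ccont (int_f_inv_sq f) z0.
Proof.
  intros Hc HB.
  apply (rect_int_param_cont (fun z w => f w * / ((w - z) * (w - z)))%C (Bf * (20 / (rho * rho * rho)))).
  - intros z Hz w Hw. apply (ccont_mult f (fun w => / ((w - z) * (w - z)))%C); auto.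
    apply ccont_inv_sq_sub. eapply near_center_off_boundary; eauto.
  - intros z Hz w Hw.
    replace (f w * / ((w - z) * (w - z)) - f w * / ((w - z0) * (w - z0)))%C with
      (f w * (/ ((w - z) * (w - z)) - / ((w - z0) * (w - z0))))%C by ring.
    rewrite Cmod_mult, Rmult_assoc.
    apply Rmult_le_compat; [apply Cmod_ge_0|apply Cmod_ge_0|auto|apply inv_sq_lipschitz; auto].
Qed.

(* The kernel [(f w - f z) / (w - z)^2 - f'(z) / (w - z)] is holomorphic off
   [z] and (w - z) times it tends to 0, so its integral vanishes. *)
Lemma derivative_kernel_int (f f' : C -> C) (z : C) :
  (forall w : C, a <= fst w <= b -> c <= snd w <= d -> cderiv f w (f' w)) ->
  Cmod (z - z0)%C < rho / 2 ->
  rect_int (fun w => 1 * ((f w - f z) * / ((w - z) * (w - z))) + (- f' z) * / (w - z))%C a b c d = 0%C.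
Proof.
  intros HD Hz. destruct (near_center_inside u0 v0 rho Hrho z Hz) as [Hz1 Hz2]. fold a b c d in Hz1, Hz2.
  apply goursat_exceptional with z; auto.
  - intros w Hw1 Hw2 Hne. eexists.
    assert (Hsq : ((w - z) * (w - z))%C <> 0%C) by (apply Cmult_neq_0; now apply sub_neq0).
    apply deriv_along_plus; apply deriv_along_scal.
    + apply deriv_along_mult; [apply cderiv_sub_const, HD; auto|].
      apply deriv_along_inv; [|exact Hsq].
      apply deriv_along_mult; apply cderiv_sub_const, deriv_along_id.
    + apply deriv_along_inv; [apply cderiv_sub_const, deriv_along_id|now apply sub_neq0].
  - intros eps Heps. destruct (HD z ltac:(lra) ltac:(lra) eps Heps) as [del [Hdel Hh]].
    exists del. split; auto. intros w Hne Hw.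
    set (h := (w - z)%C) in *. assert (Hh0 : h <> 0%C) by (now apply sub_neq0).
    specialize (Hh h I Hw). replace (z + h)%C with w in Hh by (unfold h; ring).
    replace (h * (1 * ((f w - f z) * / (h * h)) + - f' z * / h))%C with ((f w - f z - f' z * h) / h)%C
      by (field; auto).
    rewrite Cmod_div by auto. apply Rmult_le_reg_r with (Cmod h); [now apply Cmod_gt_0|].
    unfold Rdiv. rewrite Rmult_assoc, Rinv_l; [lra|]. apply Rgt_not_eq, Cmod_gt_0; auto.
Qed.

Lemma cauchy_derivative_formula (f f' : C -> C) (z : C) :
  (forall w : C, a <= fst w <= b -> c <= snd w <= d -> cderiv f w (f' w)) ->
  Cmod (z - z0)%C < rho / 2 -> (f' z * int_inv z = int_f_inv_sq f z + (- f z) * int_inv_sq z)%C.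
Proof.
  intros HD Hz.
  assert (Hk0 := derivative_kernel_int f f' z HD Hz).
  assert (Hoff : forall w, on_boundary a b c d w -> w <> z) by (intros w Hw; exact (near_center_off_boundary u0 v0 rho Hrho w z Hw Hz)).
  assert (Hfc : forall w, on_boundary a b c d w -> ccont f w).
  { intros w [Hw1 [Hw2 _]]. eapply cderiv_cont. apply HD; auto. }
  assert (Hq2 : forall w, on_boundary a b c d w -> ccont (fun w => / ((w - z) * (w - z)))%C w)
    by (intros w Hw; apply ccont_inv_sq_sub; auto).
  rewrite rect_lin in Hk0; auto; [|apply boundary_cont_of; auto..].
  - rewrite (rect_ext _ (fun w => 1 * (f w * / ((w - z) * (w - z))) + (- f z) * / ((w - z) * (w - z)))%C)
      in Hk0 by (intros; ring).
    rewrite rect_lin in Hk0; auto; [|apply boundary_cont_of; auto..].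
    + unfold int_inv, int_inv_sq, int_f_inv_sq. fold a b c d.
      set (I1 := rect_int (fun w => / (w - z))%C a b c d) in *.
      set (I2 := rect_int (fun w => / ((w - z) * (w - z)))%C a b c d) in *.
      set (I3 := rect_int (fun w => f w * / ((w - z) * (w - z)))%C a b c d) in *.
      replace (f' z * I1)%C with (f' z * I1 + (1 * (1 * I3 + - f z * I2) + - f' z * I1))%C
        by (rewrite Hk0; ring).
      ring.
    + intros w Hw. apply (ccont_mult f); auto.
  - intros w Hw. apply (ccont_mult (fun w => f w - f z)%C); auto.
    apply (ccont_plus f (fun _ => - f z)%C); auto. apply ccont_const.
  - intros w Hw. apply ccont_inv_sub; auto.
Qed.

(* The integral of 1/(w - z0) around the square does not vanish (it is
   2 pi i): each side contributes at least 1 to its imaginary part, since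
   on a side the relevant component of 1/(w - z0) is at least 1/(2 rho)
   in absolute value, with a fixed sign. *)
(* On a side of the square, w - z0 = (p, q) with |p| <= rho, q = -s rho for a
   sign s (horizontal sides), or symmetrically (vertical sides). *)
Lemma Cinv_side_snd (s p q : R) : s * s = 1 -> q = - s * rho -> Rabs p <= rho ->
  1 / (2 * rho) <= s * snd (/ (p, q))%C.
Proof.
  intros Hs Hq Hp. subst q. simpl.
  assert (Hp2 : p * p <= rho * rho) by (unfold Rabs in Hp; destruct Rcase_abs; nra).
  replace (s * (- (- s * rho) / (p * (p * 1) + - s * rho * (- s * rho * 1))))
    with (s * s * rho / (p * p + s * s * (rho * rho))) by (field; repeat split; nra).
  rewrite Hs, Rmult_1_l, Rmult_1_l.
  apply Rle_trans with (rho / (rho * rho + rho * rho)); [right; field; repeat split; nra|].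
  unfold Rdiv. apply Rmult_le_compat_l; [lra|]. apply Rinv_le_contravar; nra.
Qed.

Lemma Cinv_side_fst (s p q : R) : s * s = 1 -> p = s * rho -> Rabs q <= rho ->
  1 / (2 * rho) <= s * fst (/ (p, q))%C.
Proof.
  intros Hs Hp Hq. subst p. simpl.
  assert (Hq2 : q * q <= rho * rho) by (unfold Rabs in Hq; destruct Rcase_abs; nra).
  replace (s * (s * rho / (s * rho * (s * rho * 1) + q * (q * 1))))
    with (s * s * rho / (s * s * (rho * rho) + q * q)) by (field; repeat split; nra).
  rewrite Hs, Rmult_1_l, Rmult_1_l.
  apply Rle_trans with (rho / (rho * rho + rho * rho)); [right; field; repeat split; nra|].
  unfold Rdiv. apply Rmult_le_compat_l; [lra|]. apply Rinv_le_contravar; nra.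
Qed.

Lemma side_int_ge (s : R) (g : R -> R) (p q : R) : q - p = 2 * rho -> ex_RInt g p q ->
  (forall x, p <= x <= q -> 1 / (2 * rho) <= s * g x) -> 1 <= s * RInt g p q.
Proof.
  intros Hlen Hex H. rewrite <- RInt_scal_l by auto.
  replace 1 with (RInt (fun _ => 1 / (2 * rho)) p q)
    by (rewrite RInt_const, Hlen; unfold scal; simpl; unfold mult; simpl; field; lra).
  apply RInt_le; [lra|apply ex_RInt_const|apply (ex_RInt_scal (V := R_NormedModule)); auto|].
  intros x Hx. apply H. lra.
Qed.

Lemma int_inv_center_neq0 : int_inv z0 <> 0%C.
Proof.
  assert (Hcont : boundary_cont (fun w => / (w - z0))%C a b c d).
  { apply boundary_cont_of; auto. intros w Hw. apply ccont_inv_sub.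
    exact (near_center_off_boundary u0 v0 rho Hrho w z0 Hw center_near). }
  destruct Hcont as [H1 [H2 [H3 H4]]].
  destruct (hcont_ex _ a b c Hab H1) as [_ E1]. destruct (hcont_ex _ a b d Hab H2) as [_ E2].
  destruct (vcont_ex _ c d a Hcd H3) as [E3 _]. destruct (vcont_ex _ c d b Hcd H4) as [E4 _].
  assert (Hx : forall x, a <= x <= b -> Rabs (x - u0) <= rho)
    by (intros x Hx; unfold a, b in Hx; unfold Rabs; destruct Rcase_abs; lra).
  assert (Hy : forall y, c <= y <= d -> Rabs (y - v0) <= rho)
    by (intros y Hy; unfold c, d in Hy; unfold Rabs; destruct Rcase_abs; lra).
  assert (G1 : 1 <= 1 * RInt (fun x => snd (/ ((x, c) - z0))%C) a b).
  { apply side_int_ge; [unfold a, b; ring|auto|]. intros x Hxab.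
    replace ((x, c) - z0)%C with ((x - u0, - rho) : C) by (unfold c, z0; apply injective_projections; simpl; ring).
    apply Cinv_side_snd; auto; ring. }
  assert (G2 : 1 <= -1 * RInt (fun x => snd (/ ((x, d) - z0))%C) a b).
  { apply side_int_ge; [unfold a, b; ring|auto|]. intros x Hxab.
    replace ((x, d) - z0)%C with ((x - u0, rho) : C) by (unfold d, z0; apply injective_projections; simpl; ring).
    apply Cinv_side_snd; auto; ring. }
  assert (G3 : 1 <= -1 * RInt (fun y => fst (/ ((a, y) - z0))%C) c d).
  { apply side_int_ge; [unfold c, d; ring|auto|]. intros y Hycd.
    replace ((a, y) - z0)%C with ((- rho, y - v0) : C) by (unfold a, z0; apply injective_projections; simpl; ring).
    apply Cinv_side_fst; auto; ring. }
  assert (G4 : 1 <= 1 * RInt (fun y => fst (/ ((b, y) - z0))%C) c d).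
  { apply side_int_ge; [unfold c, d; ring|auto|]. intros y Hycd.
    replace ((b, y) - z0)%C with ((rho, y - v0) : C) by (unfold b, z0; apply injective_projections; simpl; ring).
    apply Cinv_side_fst; auto; ring. }
  intros E. assert (Hs := f_equal snd E). unfold int_inv, rect_int, hseg, vseg, Ci in Hs.
  cbn [fst snd Cplus Cminus Copp Cmult] in Hs. change (snd (RtoC 0)) with 0 in Hs. lra.
Qed.

(* Continuity of the derivative at the centre: near [z0] the derivative is
   given by the quotient of continuous functions of Cauchy's formula. *)
Lemma derivative_ccont (f f' : C -> C) (Bf : R) :
  (forall w : C, a <= fst w <= b -> c <= snd w <= d -> cderiv f w (f' w)) ->
  (forall w, on_boundary a b c d w -> Cmod (f w) <= Bf) -> ccont f' z0.
Proof.
  intros HD HB.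
  assert (Hf0 : ccont f z0) by (eapply cderiv_cont; apply HD; unfold z0, a, b, c, d; simpl; lra).
  set (N := fun z => (int_f_inv_sq f z + (- f z) * int_inv_sq z)%C).
  assert (HN : ccont N z0).
  { apply (ccont_plus (int_f_inv_sq f) (fun z => - f z * int_inv_sq z)%C).
    - apply int_f_inv_sq_cont with Bf; auto. intros w [Hw1 [Hw2 _]]. eapply cderiv_cont. apply HD; auto.
    - apply (ccont_mult (fun z => - f z)%C int_inv_sq); [|apply int_inv_sq_cont].
      apply ccont_ext with (fun z => (-1) * f z)%C; [intros; ring|].
      apply (ccont_mult (fun _ => (-1)%C) f); auto. apply ccont_const. }
  destruct (int_inv_cont (Cmod (int_inv z0))) as [del [Hdel Hdw]]; [apply Cmod_gt_0, int_inv_center_neq0|].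
  apply (ccont_local (fun z => N z * / int_inv z)%C f' z0 (Rmin (rho / 2) del)); [apply Rmin_pos; lra| |].
  - intros w Hw.
    destruct (lt_Rmin _ _ _ Hw) as [Hw1 Hw2].
    assert (HIw : int_inv w <> 0%C).
    { intros E. specialize (Hdw w Hw2). rewrite E in Hdw.
      replace (0 - int_inv z0)%C with (- int_inv z0)%C in Hdw by ring. rewrite Cmod_opp in Hdw. lra. }
    unfold N. rewrite <- (cauchy_derivative_formula f f' w HD Hw1). field. auto.
  - apply (ccont_mult N (fun z => / int_inv z)%C); auto.
    apply (ccont_inv int_inv); [apply int_inv_cont|apply int_inv_center_neq0].
Qed.

End CauchyRepresentation.

(* Holomorphic functions on the unit disk.  A bounded holomorphic function
   has a continuous derivative: apply [derivative_ccont] on a small square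
   around each point of the disk. *)
Lemma in_disk_iff (z : C) : in_disk z <-> Cmod z < 1.
Proof. unfold in_disk. rewrite Cmod_eq. tauto. Qed.

Lemma in_disk_near (z w : C) : in_disk z -> Cmod (w - z)%C < 1 - Cmod z -> in_disk w.
Proof.
  intros Hz Hw. apply in_disk_iff. replace w with (z + (w - z))%C by ring.
  eapply Rle_lt_trans. apply Cmod_triangle. lra.
Qed.

Lemma holo_cderiv (f f' : C -> C) z : holo_on_disk f f' -> in_disk z -> cderiv f z (f' z).
Proof. intros H Hz. apply has_cderiv_cderiv, H, Hz. Qed.

Lemma holo_ccont (f f' : C -> C) z : holo_on_disk f f' -> in_disk z -> ccont f z.
Proof. intros H Hz. eapply cderiv_cont. apply holo_cderiv; eauto. Qed.

Theorem holo_derivative_ccont (f f' : C -> C) (B : R) : holo_on_disk f f' ->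
  (forall z, in_disk z -> Cmod (f z) <= B) -> forall z0, in_disk z0 -> ccont f' z0.
Proof.
  intros Hh HB [u0 v0] Hz0. apply in_disk_iff in Hz0.
  set (rho := (1 - Cmod (u0, v0)) / 4).
  assert (Hrho : 0 < rho) by (unfold rho; lra).
  assert (Hin : forall w : C, u0 - rho <= fst w <= u0 + rho -> v0 - rho <= snd w <= v0 + rho -> in_disk w).
  { intros w H1 H2. apply in_disk_iff.
    replace w with ((u0, v0) + (w - (u0, v0)))%C by ring.
    eapply Rle_lt_trans. apply Cmod_triangle.
    assert (Cmod (w - (u0, v0))%C <= 2 * rho).
    { eapply Rle_trans. apply Cmod_le_abs_sum. simpl. unfold Rabs; repeat destruct Rcase_abs; lra. }
    unfold rho in *. lra. }
  apply (derivative_ccont u0 v0 rho Hrho f f' B).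
  - intros w H1 H2. apply holo_cderiv; auto.
  - intros w [H1 [H2 _]]. apply HB; auto.
Qed.

Lemma Cmod_Cexp (q : C) : Cmod (Cexp q) = exp (fst q).
Proof.
  unfold Cexp, Cmod. simpl.
  replace (exp (fst q) * cos (snd q) * (exp (fst q) * cos (snd q) * 1) +
           exp (fst q) * sin (snd q) * (exp (fst q) * sin (snd q) * 1))
    with (exp (fst q) * exp (fst q) * (Rsqr (sin (snd q)) + Rsqr (cos (snd q)))) by (unfold Rsqr; ring).
  rewrite sin2_cos2, Rmult_1_r. apply sqrt_square. apply Rlt_le, exp_pos.
Qed.

Lemma Cnorm2_ge0 (z : C) : 0 <= Cnorm2 z.
Proof. unfold Cnorm2. pose proof (Rle_0_sqr (fst z)). pose proof (Rle_0_sqr (snd z)). unfold Rsqr in *. lra. Qed.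

Lemma Cnorm2_Cmod (z : C) : Cnorm2 z = Cmod z * Cmod z.
Proof. rewrite <- Cmod_eq. unfold Defs.Cmod. rewrite sqrt_sqrt; auto. apply Cnorm2_ge0. Qed.

Lemma omega_le_dsL W X' Y Y' (z : C) : Cmod (omega_coef W X' z) <= dsL_density W X' Y Y' z.
Proof.
  unfold dsL_density. rewrite <- Cmod_eq. unfold Defs.Cmod. apply sqrt_le_1_alt.
  pose proof (Cnorm2_ge0 (theta_coef W X' Y Y' z)). lra.
Qed.

Lemma theta_le_dsL W X' Y Y' (z : C) : Cmod (theta_coef W X' Y Y' z) <= dsL_density W X' Y Y' z.
Proof.
  unfold dsL_density. rewrite <- Cmod_eq. unfold Defs.Cmod. apply sqrt_le_1_alt.
  pose proof (Cnorm2_ge0 (omega_coef W X' z)). lra.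
Qed.

Lemma omega_mod W X' (z : C) : Cmod (omega_coef W X' z) = exp (-2 * fst (W z)) * Cmod (X' z).
Proof.
  unfold omega_coef. rewrite Cmod_mult, Cmod_Cexp. f_equal. f_equal. unfold two. simpl. ring.
Qed.

Lemma theta_mod W X' Y Y' (z : C) :
  Cmod (theta_coef W X' Y Y' z) = exp (2 * fst (W z)) * Cmod (Y' z - Y z * Y z * X' z)%C.
Proof.
  unfold theta_coef. rewrite Cmod_mult, Cmod_Cexp. f_equal. f_equal. unfold two. simpl. ring.
Qed.

(* For a null curve, Z'^2 = -(X'^2 + Y'^2), so |F'| <= 2 (|X'| + |Y'|). *)
Lemma induced_density_null X' Y' Z' (z : C) :
  (Cmul (X' z) (X' z) + Cmul (Y' z) (Y' z) + Cmul (Z' z) (Z' z))%C = 0%C ->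
  induced_density X' Y' Z' z <= 2 * (Cmod (X' z) + Cmod (Y' z)).
Proof.
  intros Hn. unfold induced_density.
  set (x := X' z) in *. set (y := Y' z) in *. set (w := Z' z) in *.
  assert (Hw : Cnorm2 w <= Cnorm2 x + Cnorm2 y).
  { rewrite !Cnorm2_Cmod, <- Cmod_mult.
    replace (w * w)%C with (- (x * x + y * y))%C.
    - rewrite Cmod_opp. eapply Rle_trans. apply Cmod_triangle. rewrite !Cmod_mult. lra.
    - replace (w * w)%C with ((x * x + y * y + w * w) - (x * x + y * y))%C by ring.
      change ((x * x + y * y + w * w)%C = 0%C) in Hn. rewrite Hn. ring. }
  pose proof (Cmod_ge_0 x). pose proof (Cmod_ge_0 y).
  rewrite !Cnorm2_Cmod in *.
  rewrite <- (sqrt_square (2 * (Cmod x + Cmod y))) by lra.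
  apply sqrt_le_1_alt. nra.
Qed.

Lemma cont_sqrt_comp (f : R -> R) t : continuous f t -> 0 <= f t -> continuous (fun s => sqrt (f s)) t.
Proof.
  intros H Hp. apply (continuous_comp f sqrt); auto.
  apply continuity_pt_filterlim, continuity_pt_sqrt, Hp.
Qed.

Lemma cont_exp_comp (f : R -> R) t : continuous f t -> continuous (fun s => exp (f s)) t.
Proof.
  intros H. apply (continuous_comp f exp); auto.
  apply continuity_pt_filterlim, derivable_continuous_pt, derivable_pt_exp.
Qed.

Lemma cont_Cnorm2 (phi : R -> C) t : pcont phi t -> continuous (fun s => Cnorm2 (phi s)) t.
Proof.
  intros H. unfold Cnorm2.
  apply (continuous_plus (V := R_NormedModule) (fun s => fst (phi s) * fst (phi s)) (fun s => snd (phi s) * snd (phi s)));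
    apply (continuous_mult (K := R_AbsRing)); (apply pcont_fst || apply pcont_snd); auto.
Qed.

Lemma cont_Cmod (phi : R -> C) t : pcont phi t -> continuous (fun s => Defs.Cmod (phi s)) t.
Proof.
  intros H. unfold Defs.Cmod. apply (cont_sqrt_comp (fun s => Cnorm2 (phi s))); [|apply Cnorm2_ge0].
  apply cont_Cnorm2; auto.
Qed.

Lemma FTC_bound (f f' g : R -> R) (K t : R) : 0 <= t -> 0 <= K -> ex_RInt g 0 t ->
  (forall x, 0 <= x <= t -> is_derive f x (f' x)) ->
  (forall x, 0 <= x <= t -> continuous f' x) ->
  (forall x, 0 <= x <= t -> Rabs (f' x) <= K * g x) ->
  Rabs (f t - f 0) <= K * RInt g 0 t.
Proof.
  intros Ht HK Hg Hdf Hc Hb.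
  assert (HI : is_RInt f' 0 t (minus (f t) (f 0))).
  { apply (is_RInt_derive (V := R_CompleteNormedModule) f f');
      intros x Hx; rewrite Rmin_left, Rmax_right in Hx by lra; [apply Hdf|apply Hc]; lra. }
  assert (HE : RInt f' 0 t = f t - f 0) by (apply is_RInt_unique; exact HI).
  assert (Hex : ex_RInt f' 0 t) by (exists (minus (f t) (f 0)); exact HI).
  assert (H1 : RInt f' 0 t <= RInt (fun x => K * g x) 0 t).
  { apply RInt_le; auto; [apply (ex_RInt_scal (V := R_NormedModule)); auto|].
    intros x Hx. eapply Rle_trans; [apply Rle_abs|]. apply Hb; lra. }
  assert (H2 : RInt (fun x => (- K) * g x) 0 t <= RInt f' 0 t).
  { apply RInt_le; auto; [apply (ex_RInt_scal (V := R_NormedModule)); auto|].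
    intros x Hx. assert (Hb' := Hb x ltac:(lra)).
    pose proof (Rle_abs (- f' x)). rewrite Rabs_Ropp in *. lra. }
  rewrite RInt_scal_l in H1, H2 by auto. rewrite HE in H1, H2.
  unfold Rabs. destruct Rcase_abs; lra.
Qed.

Lemma exp_double (u : R) : exp (2 * u) = exp u * exp u.
Proof. rewrite <- exp_plus. f_equal. ring. Qed.

Lemma exp_neg_double (u : R) : exp (-2 * u) = / exp u * / exp u.
Proof. rewrite <- !exp_Ropp, <- exp_plus. f_equal. ring. Qed.

Section WeakCompleteness.
Variables (X Y X' Y' W W' : C -> C).
Hypothesis hX : holo_on_disk X X'.
Hypothesis hY : holo_on_disk Y Y'.
Hypothesis hW : holo_on_disk W W'.
Hypothesis hW' : forall z, in_disk z -> W' z = Defs.Copp (Cmul (Y z) (X' z)).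
Hypothesis hXb : forall z, in_disk z -> 1 < Defs.Cmod (X z) < 2.
Hypothesis hYb : forall z, in_disk z -> Defs.Cmod (Y z) < 1/3.

Lemma X_bound z : in_disk z -> Cmod (X z) < 2.
Proof. intros Hz. rewrite <- Cmod_eq. apply hXb, Hz. Qed.

Lemma Y_bound z : in_disk z -> Cmod (Y z) < 1 / 3.
Proof. intros Hz. rewrite <- Cmod_eq. apply hYb, Hz. Qed.

Lemma X'_ccont z : in_disk z -> ccont X' z.
Proof. apply (holo_derivative_ccont X X' 2 hX). intros w Hw. pose proof (X_bound w Hw). lra. Qed.

Lemma Y'_ccont z : in_disk z -> ccont Y' z.
Proof. apply (holo_derivative_ccont Y Y' (1/3) hY). intros w Hw. pose proof (Y_bound w Hw). lra. Qed.

Lemma W'_ccont z : in_disk z -> ccont W' z.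
Proof.
  intros Hz. assert (Hz' := proj1 (in_disk_iff z) Hz).
  apply (ccont_local (fun w => (-1) * (Y w * X' w))%C W' z (1 - Cmod z)); [lra| |].
  - intros w Hw. rewrite hW' by (eapply in_disk_near; eauto).
    unfold Defs.Copp, Cmul. apply injective_projections; simpl; ring.
  - apply (ccont_mult (fun _ => (-1)%C)); [apply ccont_const|].
    apply (ccont_mult Y X'); [apply (holo_ccont Y Y')|apply X'_ccont]; auto.
Qed.

Section Path.
Variables (gamma gamma' : R -> C).
Hypothesis Hd : divergent_path gamma gamma'.

Lemma path_in_disk t : 0 <= t < 1 -> in_disk (gamma t).
Proof. destruct Hd as [H _]. auto. Qed.

Lemma path_pderiv t : 0 <= t < 1 -> pderiv gamma t (gamma' t).
Proof. intros Ht. destruct Hd as [_ [H _]]. destruct (H t Ht) as [H1 [H2 _]]. now apply pderiv_of_components. Qed.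

Lemma path'_pcont t : 0 <= t < 1 -> pcont gamma' t.
Proof. intros Ht. destruct Hd as [_ [H _]]. destruct (H t Ht) as [_ [_ [H3 H4]]]. now apply pcont_of_components. Qed.

Lemma holo_pderiv (F F' : C -> C) t : holo_on_disk F F' -> 0 <= t < 1 ->
  pderiv (fun s => F (gamma s)) t (F' (gamma t) * gamma' t)%C.
Proof. intros HF Ht. apply pderiv_comp; [apply holo_cderiv; auto; apply path_in_disk|apply path_pderiv]; auto. Qed.

Lemma holo_pcont (F : C -> C) t : (forall z, in_disk z -> ccont F z) -> 0 <= t < 1 ->
  pcont (fun s => F (gamma s)) t.
Proof.
  intros HF Ht. apply pcont_comp; [eapply pderiv_cont, path_pderiv; auto|apply HF, path_in_disk; auto].
Qed.

Lemma expW_pcont (k : C) t : 0 <= t < 1 -> pcont (fun s => Cexp (k * W (gamma s))%C) t.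
Proof.
  intros Ht. eapply pderiv_cont, (pderiv_cexp (fun s => k * W (gamma s))%C).
  exact (deriv_along_scal _ _ k _ _ (holo_pderiv W W' t hW Ht)).
Qed.

Lemma Y2X'_pcont t : 0 <= t < 1 -> pcont (fun s => Y (gamma s) * Y (gamma s) * X' (gamma s))%C t.
Proof.
  intros Ht. assert (HYc : forall z, in_disk z -> ccont Y z) by (intros; eapply holo_ccont; eauto).
  apply pcont_mult; [apply pcont_mult|]; apply holo_pcont; auto. apply X'_ccont.
Qed.

Lemma omega_pcont t : 0 <= t < 1 -> pcont (fun s => omega_coef W X' (gamma s)) t.
Proof.
  intros Ht. apply pcont_ext with (fun s => Cexp ((- two) * W (gamma s))%C * X' (gamma s))%C.
  - intros s. unfold omega_coef.
    replace (Defs.Copp (Cmul two (W (gamma s)))) with ((- two) * W (gamma s))%C; [reflexivity|].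
    unfold Defs.Copp, Cmul, two. apply injective_projections; simpl; ring.
  - apply pcont_mult; [apply expW_pcont|apply holo_pcont; [apply X'_ccont|]]; auto.
Qed.

Lemma theta_pcont t : 0 <= t < 1 -> pcont (fun s => theta_coef W X' Y Y' (gamma s)) t.
Proof.
  intros Ht. apply pcont_ext with (fun s => Cexp (two * W (gamma s))%C *
        (Y' (gamma s) + (-1) * (Y (gamma s) * Y (gamma s) * X' (gamma s))))%C.
  - intros s. unfold theta_coef.
    replace (Csub (Y' (gamma s)) (Cmul (Cmul (Y (gamma s)) (Y (gamma s))) (X' (gamma s)))) with
      (Y' (gamma s) + (-1) * (Y (gamma s) * Y (gamma s) * X' (gamma s)))%C; [reflexivity|].
    unfold Csub, Cadd, Defs.Copp, Cmul. apply injective_projections; simpl; ring.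
  - apply pcont_mult; [apply expW_pcont; auto|].
    apply pcont_plus; [apply holo_pcont; [apply Y'_ccont|auto]|].
    apply pcont_mult; [apply pcont_const|apply Y2X'_pcont; auto].
Qed.

Definition speedL (s : R) := dsL_density W X' Y Y' (gamma s) * Defs.Cmod (gamma' s).

Lemma speedL_eq s : speedL s = dsL_density W X' Y Y' (gamma s) * Cmod (gamma' s).
Proof. unfold speedL. now rewrite Cmod_eq. Qed.

Lemma speedL_ge0 s : 0 <= speedL s.
Proof. unfold speedL. apply Rmult_le_pos; apply sqrt_pos. Qed.

Lemma speedL_cont t : 0 <= t < 1 -> continuous speedL t.
Proof.
  intros Ht. unfold speedL.
  apply (continuous_mult (K := R_AbsRing) (fun s => dsL_density W X' Y Y' (gamma s))); [|apply cont_Cmod, path'_pcont; auto].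
  unfold dsL_density.
  apply (cont_sqrt_comp (fun s => Cnorm2 (omega_coef W X' (gamma s)) + Cnorm2 (theta_coef W X' Y Y' (gamma s)))).
  - apply (continuous_plus (V := R_NormedModule)); apply cont_Cnorm2; [apply omega_pcont|apply theta_pcont]; auto.
  - pose proof (Cnorm2_ge0 (omega_coef W X' (gamma t))). pose proof (Cnorm2_ge0 (theta_coef W X' Y Y' (gamma t))). lra.
Qed.

Lemma speedL_ex s : 0 <= s < 1 -> ex_RInt speedL 0 s.
Proof.
  intros Hs. apply (ex_RInt_continuous (V := R_CompleteNormedModule)). intros z Hz.
  rewrite Rmin_left, Rmax_right in Hz by lra. apply speedL_cont. lra.
Qed.

(* First estimate: |e^{-2W}| along the path has derivative
   -2 Re(W' gamma') e^{-2 Re W} = 2 Re(Y X' gamma') e^{-2 Re W}, of modulus at most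
   (2/3) |omega| |gamma'|. *)
Definition decay (s : R) := exp (-2 * fst (W (gamma s))).
Definition decay' (s : R) := decay s * (-2 * fst (W' (gamma s) * gamma' s)%C).

Lemma decay_deriv t : 0 <= t < 1 -> is_derive decay t (decay' t).
Proof.
  intros Ht. unfold decay', decay.
  assert (H1 := pderiv_fst _ _ _ (holo_pderiv W W' t hW Ht)). apply is_derive_Reals in H1.
  assert (H2 := is_derive_comp exp (fun s => -2 * fst (W (gamma s))) t _ _
                  (is_derive_exp _) (is_derive_scal (fun s => fst (W (gamma s))) t (-2) _ H1)).
  replace (exp (-2 * fst (W (gamma t))) * (-2 * fst (W' (gamma t) * gamma' t)%C))
    with ((-2 * fst (W' (gamma t) * gamma' t)%C) * exp (-2 * fst (W (gamma t)))) by ring.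
  exact H2.
Qed.

Lemma decay'_cont t : 0 <= t < 1 -> continuous decay' t.
Proof.
  intros Ht. unfold decay', decay.
  apply (continuous_mult (K := R_AbsRing)).
  - apply (cont_exp_comp (fun s => -2 * fst (W (gamma s)))).
    apply (continuous_scal_r (V := R_NormedModule) (-2) (fun s => fst (W (gamma s)))).
    apply pcont_fst, holo_pcont; auto. intros; eapply holo_ccont; eauto.
  - apply (continuous_scal_r (V := R_NormedModule) (-2) (fun s => fst (W' (gamma s) * gamma' s)%C)).
    apply (pcont_fst (fun s => W' (gamma s) * gamma' s)%C).
    apply pcont_mult; [apply holo_pcont; [apply W'_ccont|auto]|apply path'_pcont; auto].
Qed.

Lemma decay'_bound s : 0 <= s < 1 -> Rabs (decay' s) <= 2 / 3 * speedL s.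
Proof.
  intros Hs. assert (Hz := path_in_disk s Hs). set (z := gamma s) in *. set (v := gamma' s).
  unfold decay', decay. fold z v. rewrite speedL_eq. fold z v.
  assert (H1 : Rabs (fst (W' z * v)%C) <= Cmod (Y z) * Cmod (X' z) * Cmod v).
  { eapply Rle_trans; [apply Rabs_fst_le|]. rewrite hW' by auto.
    change (Cmod (- (Y z * X' z) * v)%C <= Cmod (Y z) * Cmod (X' z) * Cmod v).
    rewrite !Cmod_mult, Cmod_opp, Cmod_mult. lra. }
  assert (HY := Y_bound z Hz).
  assert (Hom := omega_mod W X' z). assert (Hge := omega_le_dsL W X' Y Y' z).
  set (e := exp (-2 * fst (W z))) in *. assert (He : 0 < e) by apply exp_pos.
  pose proof (Cmod_ge_0 (X' z)). pose proof (Cmod_ge_0 v). pose proof (Cmod_ge_0 (Y z)).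
  rewrite Rabs_mult, (Rabs_pos_eq e) by lra.
  replace (Rabs (-2 * fst (W' z * v)%C)) with (2 * Rabs (fst (W' z * v)%C))
    by (rewrite Rabs_mult; f_equal; unfold Rabs; destruct Rcase_abs; lra).
  apply Rle_trans with (2 / 3 * (e * Cmod (X' z)) * Cmod v).
  - assert (Cmod (Y z) * Cmod (X' z) * Cmod v <= 1 / 3 * Cmod (X' z) * Cmod v)
      by (apply Rmult_le_compat_r; auto; apply Rmult_le_compat_r; lra).
    nra.
  - rewrite <- Hom, Rmult_assoc. apply Rmult_le_compat_l; [lra|]. apply Rmult_le_compat_r; auto.
Qed.

(* Second estimate: the entry (1 + X Y) e^W of the lift L along the path has
   derivative X (Y' - Y^2 X') gamma' e^W = X e^{-W} theta gamma', of modulus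
   at most 2 e^{-Re W} |theta| |gamma'| <= 2 (1 + |e^{-2W}|) |theta| |gamma'|. *)
Definition entry (s : R) := ((1 + X (gamma s) * Y (gamma s)) * Cexp (W (gamma s)))%C.
Definition entry' (s : R) :=
  (X (gamma s) * (Y' (gamma s) - Y (gamma s) * Y (gamma s) * X' (gamma s)) * gamma' s * Cexp (W (gamma s)))%C.

Lemma entry_pderiv t : 0 <= t < 1 -> pderiv entry t (entry' t).
Proof.
  intros Ht. assert (Hz := path_in_disk t Ht).
  assert (HA : pderiv (fun s => 1 + X (gamma s) * Y (gamma s))%C t
                 ((0 + (X' (gamma t) * Y (gamma t) + X (gamma t) * Y' (gamma t))) * gamma' t)%C).
  { apply (pderiv_comp (fun z => 1 + X z * Y z)%C); [|apply path_pderiv; auto].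
    apply deriv_along_plus; [apply deriv_along_const|].
    apply deriv_along_mult; apply holo_cderiv; auto. }
  assert (HE := pderiv_cexp _ _ _ (holo_pderiv W W' t hW Ht)).
  eapply deriv_along_val; [|exact (pderiv_mult _ _ t _ _ HA HE)].
  unfold entry'. rewrite hW' by auto.
  change (Defs.Copp (Cmul (Y (gamma t)) (X' (gamma t)))) with (- (Y (gamma t) * X' (gamma t)))%C.
  ring.
Qed.

Lemma entry'_pcont t : 0 <= t < 1 -> pcont entry' t.
Proof.
  intros Ht. unfold entry'.
  apply pcont_mult; [|eapply pderiv_cont, pderiv_cexp, holo_pderiv; [exact hW|exact Ht]].
  apply pcont_mult; [|apply path'_pcont; auto].
  apply pcont_mult; [apply holo_pcont; auto; intros; eapply holo_ccont; eauto|].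
  apply pcont_plus; [apply holo_pcont; [apply Y'_ccont|auto]|].
  apply pcont_ext with (fun s => (-1) * (Y (gamma s) * Y (gamma s) * X' (gamma s)))%C; [intros; ring|].
  apply pcont_mult; [apply pcont_const|apply Y2X'_pcont; auto].
Qed.

Lemma entry'_bound s : 0 <= s < 1 -> Cmod (entry' s) <= 2 * (1 + decay s) * speedL s.
Proof.
  intros Hs. assert (Hz := path_in_disk s Hs).
  unfold entry', decay. rewrite speedL_eq.
  set (z := gamma s) in *. set (v := gamma' s).
  rewrite !Cmod_mult, Cmod_Cexp.
  assert (Hth := theta_mod W X' Y Y' z). assert (Hge := theta_le_dsL W X' Y Y' z).
  assert (HX := X_bound z Hz).
  rewrite exp_double in Hth. rewrite exp_neg_double.
  set (e := exp (fst (W z))) in *. set (y := / e).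
  assert (He : 0 < e) by apply exp_pos.
  assert (Hy : 0 < y) by (apply Rinv_0_lt_compat; exact He).
  assert (Hey : e * y = 1) by (unfold y; field; lra).
  set (D := Cmod (Y' z - Y z * Y z * X' z)%C) in *.
  set (T := Cmod (theta_coef W X' Y Y' z)) in *.
  set (rL := dsL_density W X' Y Y' z) in *.
  assert (HD : D = y * y * T) by (rewrite Hth; replace (y * y * (e * e * D)) with ((e * y) * (e * y) * D) by ring;
                                  rewrite Hey; ring).
  rewrite HD.
  pose proof (Cmod_ge_0 (X z)). pose proof (Cmod_ge_0 v). assert (0 <= T) by apply Cmod_ge_0.
  replace (Cmod (X z) * (y * y * T) * Cmod v * e) with (y * (Cmod (X z) * T) * Cmod v * (e * y)) by ring.
  rewrite Hey, Rmult_1_r.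
  assert (Hyy : y <= 1 + y * y) by nra.
  assert (HXT : Cmod (X z) * T <= 2 * rL) by (apply Rmult_le_compat; lra).
  replace (2 * (1 + y * y) * (rL * Cmod v)) with ((2 * (1 + y * y) * rL) * Cmod v) by ring.
  apply Rmult_le_compat_r; [lra|]. nra.
Qed.

(* Under the assumption that the ds_L-length of the path is bounded by [M],
   the two estimates integrate to bounds on e^{-2 Re W} and on the entry,
   whence on e^{Re W} (because |1 + X Y| >= 1/3); then |X'| and |Y'|, and
   finally the induced metric, are controlled by ds_L along the path. *)
Section BoundedLength.
Variable M : R.
Hypothesis HM : forall s, 0 <= s < 1 -> RInt speedL 0 s <= M.

Lemma length_bound_nonneg : 0 <= M.
Proof. specialize (HM 0 ltac:(lra)). rewrite RInt_point in HM. exact HM. Qed.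

Let C1 := decay 0 + 2 / 3 * M.
Let K := 2 * (1 + C1).
Let C3 := 3 * (Cmod (entry 0) + 2 * (K * M)).

Lemma decay_bounded t : 0 <= t < 1 -> decay t <= C1.
Proof.
  intros Ht.
  assert (HF := FTC_bound decay decay' speedL (2 / 3) t ltac:(lra) ltac:(lra) (speedL_ex t Ht)
                  (fun x Hx => decay_deriv x ltac:(lra)) (fun x Hx => decay'_cont x ltac:(lra))
                  (fun x Hx => decay'_bound x ltac:(lra))).
  pose proof (HM t Ht). pose proof (Rle_abs (decay t - decay 0)). unfold C1. lra.
Qed.

Lemma entry_bounded t : 0 <= t < 1 -> Cmod (entry t) <= Cmod (entry 0) + 2 * (K * M).
Proof.
  intros Ht. assert (HM0 := length_bound_nonneg).
  assert (HK : 0 <= K) by (unfold K, C1; pose proof (exp_pos (-2 * fst (W (gamma 0)))); unfold decay; lra).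
  assert (Hpt : forall x, 0 <= x <= t -> Cmod (entry' x) <= K * speedL x).
  { intros x Hx. eapply Rle_trans; [apply entry'_bound; lra|]. apply Rmult_le_compat_r; [apply speedL_ge0|].
    unfold K. pose proof (decay_bounded x ltac:(lra)). lra. }
  assert (HKM : K * RInt speedL 0 t <= K * M) by (apply Rmult_le_compat_l; auto).
  assert (Hre : Rabs (fst (entry t) - fst (entry 0)) <= K * RInt speedL 0 t).
  { apply (FTC_bound (fun s => fst (entry s)) (fun s => fst (entry' s))); auto; [lra|apply speedL_ex; auto|..];
      intros x Hx.
    - apply is_derive_Reals, pderiv_fst, entry_pderiv. lra.
    - apply pcont_fst, entry'_pcont. lra.
    - eapply Rle_trans; [apply Rabs_fst_le|]. apply Hpt. lra. }
  assert (Him : Rabs (snd (entry t) - snd (entry 0)) <= K * RInt speedL 0 t).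
  { apply (FTC_bound (fun s => snd (entry s)) (fun s => snd (entry' s))); auto; [lra|apply speedL_ex; auto|..];
      intros x Hx.
    - apply is_derive_Reals, pderiv_snd, entry_pderiv. lra.
    - apply pcont_snd, entry'_pcont. lra.
    - eapply Rle_trans; [apply Rabs_snd_le|]. apply Hpt. lra. }
  replace (entry t) with (entry 0 + (entry t - entry 0))%C by ring.
  eapply Rle_trans; [apply Cmod_triangle|]. apply Rplus_le_compat_l.
  eapply Rle_trans; [apply Cmod_le_abs_sum|]. cbn [fst snd Cminus Cplus Copp]. unfold Rminus in Hre, Him. lra.
Qed.

Lemma growth_bounded t : 0 <= t < 1 -> exp (fst (W (gamma t))) <= C3.
Proof.
  intros Ht. assert (Hz := path_in_disk t Ht).
  assert (Hmod : Cmod (entry t) = Cmod (1 + X (gamma t) * Y (gamma t))%C * exp (fst (W (gamma t))))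
    by (unfold entry; rewrite Cmod_mult, Cmod_Cexp; reflexivity).
  assert (HA : 1 / 3 <= Cmod (1 + X (gamma t) * Y (gamma t))%C).
  { pose proof (X_bound _ Hz). pose proof (Y_bound _ Hz).
    pose proof (Cmod_triangle (1 + X (gamma t) * Y (gamma t)) (- (X (gamma t) * Y (gamma t))))%C as T.
    replace (1 + X (gamma t) * Y (gamma t) + - (X (gamma t) * Y (gamma t)))%C with (RtoC 1) in T by ring.
    rewrite Cmod_1, Cmod_opp, Cmod_mult in T.
    pose proof (Cmod_ge_0 (X (gamma t))). pose proof (Cmod_ge_0 (Y (gamma t))). nra. }
  assert (He : 0 < exp (fst (W (gamma t)))) by apply exp_pos.
  pose proof (entry_bounded t Ht). unfold C3. nra.
Qed.

(* |X'| = e^{2 Re W} |omega| <= C3^2 ds_L, |Y' - Y^2 X'| = e^{-2 Re W} |theta| <= C1 ds_L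
   and |Y'| <= |Y' - Y^2 X'| + |X'|. *)
Lemma induced_le_speedL (Z' : C -> C)
  (hnull : forall z, in_disk z -> Cadd (Cadd (Cmul (X' z) (X' z)) (Cmul (Y' z) (Y' z))) (Cmul (Z' z) (Z' z)) = C0)
  s : 0 <= s < 1 ->
  induced_density X' Y' Z' (gamma s) * Defs.Cmod (gamma' s) <= 2 * (2 * (C3 * C3) + C1) * speedL s.
Proof.
  intros Hs. assert (Hz := path_in_disk s Hs).
  assert (HC1 := decay_bounded s Hs). assert (HC3 := growth_bounded s Hs). unfold decay in HC1.
  rewrite speedL_eq, Cmod_eq. set (z := gamma s) in *. set (v := gamma' s).
  assert (HF := induced_density_null X' Y' Z' z (hnull z Hz)).
  assert (Hom := omega_mod W X' z). assert (Hth := theta_mod W X' Y Y' z).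
  assert (Hgo := omega_le_dsL W X' Y Y' z). assert (Hgt := theta_le_dsL W X' Y Y' z).
  assert (HY := Y_bound z Hz).
  rewrite exp_double in Hth. rewrite exp_neg_double in Hom, HC1.
  set (e := exp (fst (W z))) in *. set (y := / e) in *.
  assert (He : 0 < e) by apply exp_pos.
  assert (Hy : 0 < y) by (apply Rinv_0_lt_compat; exact He).
  assert (Hey : e * y = 1) by (unfold y; field; lra).
  set (rL := dsL_density W X' Y Y' z) in *.
  pose proof (Cmod_ge_0 (X' z)). pose proof (Cmod_ge_0 v). pose proof (Cmod_ge_0 (Y z)).
  assert (HX' : Cmod (X' z) <= C3 * C3 * rL).
  { replace (Cmod (X' z)) with (e * e * (y * y * Cmod (X' z)))
      by (replace (e * e * (y * y * Cmod (X' z))) with ((e * y) * (e * y) * Cmod (X' z)) by ring; rewrite Hey; ring).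
    rewrite <- Hom. apply Rmult_le_compat; try nra; apply Cmod_ge_0. }
  set (D := Cmod (Y' z - Y z * Y z * X' z)%C) in *.
  assert (HD : D <= C1 * rL).
  { replace D with (y * y * (e * e * D))
      by (replace (y * y * (e * e * D)) with ((e * y) * (e * y) * D) by ring; rewrite Hey; ring).
    rewrite <- Hth. apply Rmult_le_compat; try nra; apply Cmod_ge_0. }
  assert (HY' : Cmod (Y' z) <= D + Cmod (X' z)).
  { replace (Y' z) with ((Y' z - Y z * Y z * X' z) + Y z * Y z * X' z)%C by ring.
    eapply Rle_trans; [apply Cmod_triangle|]. fold D. rewrite !Cmod_mult.
    assert (Cmod (Y z) * Cmod (Y z) <= 1) by nra. nra. }
  apply Rle_trans with (2 * (Cmod (X' z) + Cmod (Y' z)) * Cmod v); [apply Rmult_le_compat_r; auto|].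
  replace (2 * (2 * (C3 * C3) + C1) * (rL * Cmod v)) with ((2 * (2 * (C3 * C3 * rL) + C1 * rL)) * Cmod v) by ring.
  apply Rmult_le_compat_r; auto. lra.
Qed.

End BoundedLength.

(* If the ds_L-length of the path were bounded, so would be its length for the
   (complete) induced metric. *)
Lemma dsL_length_unbounded (Z' : C -> C)
  (hnull : forall z, in_disk z -> Cadd (Cadd (Cmul (X' z) (X' z)) (Cmul (Y' z) (Y' z))) (Cmul (Z' z) (Z' z)) = C0)
  (hcomp : complete_conformal_metric (induced_density X' Y' Z')) (M : R) :
  exists s, 0 <= s < 1 /\ M < RInt speedL 0 s.
Proof.
  apply NNPP. intros Hn.
  assert (HM : forall s, 0 <= s < 1 -> RInt speedL 0 s <= M)
    by (intros s Hs; apply Rnot_lt_le; intros Hlt; apply Hn; exists s; auto).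
  assert (HM0 := length_bound_nonneg M HM).
  set (C1 := decay 0 + 2 / 3 * M). set (C3 := 3 * (Cmod (entry 0) + 2 * (2 * (1 + C1) * M))).
  set (Kf := 2 * (2 * (C3 * C3) + C1)).
  assert (HKf : 0 <= Kf).
  { assert (0 <= C1) by (unfold C1, decay; pose proof (exp_pos (-2 * fst (W (gamma 0)))); lra).
    assert (0 <= C3 * C3) by nra. unfold Kf. lra. }
  destruct (hcomp gamma gamma' Hd (Kf * M)) as [s [Hs [pr Hlt]]].
  rewrite <- RInt_Reals in Hlt.
  assert (Hle : RInt (fun t => induced_density X' Y' Z' (gamma t) * Defs.Cmod (gamma' t)) 0 s <=
                RInt (fun t => Kf * speedL t) 0 s).
  { apply RInt_le; [lra|exact (ex_RInt_Reals_1 _ _ _ pr)|apply (ex_RInt_scal (V := R_NormedModule)), speedL_ex; auto|].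
    intros x Hx. apply (induced_le_speedL M HM Z' hnull x). lra. }
  rewrite RInt_scal_l in Hle by (apply speedL_ex; auto).
  assert (Kf * RInt speedL 0 s <= Kf * M) by (apply Rmult_le_compat_l; auto).
  lra.
Qed.

End Path.

Theorem dsL_complete (Z' : C -> C)
  (hnull : forall z, in_disk z -> Cadd (Cadd (Cmul (X' z) (X' z)) (Cmul (Y' z) (Y' z))) (Cmul (Z' z) (Z' z)) = C0)
  (hcomp : complete_conformal_metric (induced_density X' Y' Z')) :
  complete_conformal_metric (dsL_density W X' Y Y').
Proof.
  intros gamma gamma' Hd M.
  destruct (dsL_length_unbounded gamma gamma' Hd Z' hnull hcomp M) as [s [Hs Hlt]].
  exists s. split; auto.
  exists (ex_RInt_Reals_0 _ _ _ (speedL_ex gamma gamma' Hd s Hs)).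
  rewrite <- RInt_Reals. exact Hlt.
Qed.

End WeakCompleteness.

Import Pilot.Defs.

Theorem proposition2p4
  (X Y Z X' Y' Z' W W' : Cpx -> Cpx)
  (* F = (X,Y,Z) holomorphic on D_1, with derivatives X', Y', Z' *)
  (hX : holo_on_disk X X') (hY : holo_on_disk Y Y') (hZ : holo_on_disk Z Z')
  (* bounded *)
  (hbdd : exists B : R, forall z, in_disk z ->
            Cmod (X z) <= B /\ Cmod (Y z) <= B /\ Cmod (Z z) <= B)
  (* null: F_z . F_z = 0 *)
  (hnull : forall z, in_disk z ->
     Cadd (Cadd (Cmul (X' z) (X' z)) (Cmul (Y' z) (Y' z))) (Cmul (Z' z) (Z' z)) = C0)
  (* immersion: F_z never vanishes *)
  (himm : forall z, in_disk z -> (X' z, Y' z, Z' z) <> (C0, C0, C0))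
  (* complete induced metric *)
  (hcomp : complete_conformal_metric (induced_density X' Y' Z'))
  (* 1 < |X| < 2 and |Y| < 1/3 on D_1 *)
  (hXb : forall z, in_disk z -> 1 < Cmod (X z) < 2)
  (hYb : forall z, in_disk z -> Cmod (Y z) < 1/3)
  (* W(z) = - int_0^z Y dX : the holomorphic primitive of -Y X' vanishing at 0 *)
  (hW : holo_on_disk W W')
  (hW' : forall z, in_disk z -> W' z = Copp (Cmul (Y z) (X' z)))
  (hW0 : W C0 = C0) :
  complete_conformal_metric (dsL_density W X' Y Y').
Proof.
  exact (dsL_complete X Y X' Y' W W' hX hY hW hW' hXb hYb Z' hnull hcomp).
Qed.
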